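(* Let $X$ be a complex Banach space and let $\mathcal{D}=\{X_n:n\ge1\}$ be an $R$-Schauder decomposition of $X$. Then: (a) every sectorial operator $A$ on $X$ which is a $\mathcal{D}$-multiplier is $R$-sectorial of $R$-type $0$ (i.e. of $R$-type $\omega$ for every $\omega\in(0,\pi)$); (b) every Ritt operator $T\in B(X)$ which is a $\mathcal{D}$-multiplier is $R$-Ritt.
   Context: $R$-boundedness: with $(\varepsilon_j)$ independent Rademacher variables on $(\Omega,\mathbb{P})$ and $\|\sum_{j=1}^k\varepsilon_j\otimes x_j\|_{R,X}=\int_\Omega\|\sum_j\varepsilon_j(u)x_j\|\,d\mathbb{P}(u)$, a set $F\subset B(X)$ is $R$-bounded if there is $K$ with $\|\sum_j\varepsilon_j\otimes T_j x_j\|_{R,X}\le K\|\sum_j\varepsilon_j\otimes x_j\|_{R,X}$ for all finite families $T_j\in F$, $x_j\in X$. $\Sigma_\omega=\{\lambda\ne0:|\mathrm{Arg}\lambda|<\omega\}$. A closed densely defined $A$ is sectorial of type $\omega\in(0,\pi)$ if $\sigma(A)\subset\overline{\Sigma_\omega}$ and for each $\theta\in(\omega,\pi)$ the set $\{\lambda(\lambda I_X-A)^{-1}:\lambda\in\mathbb{C}\setminus\overline{\Sigma_\theta}\}$ is bounded; $R$-sectorial of $R$-type $\omega$ if moreover these sets are $R$-bounded; ($R$-)type $0$ means ($R$-)type $\omega$ for all $\omega\in(0,\pi)$. $T\in B(X)$ is a Ritt operator if $\{T^n:n\ge0\}$ and $\{nT^n(I_X-T):n\ge1\}$ are bounded,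 and $R$-Ritt if both sets are $R$-bounded. A Schauder decomposition of $X$ is a sequence $\mathcal{D}=\{X_n:n\ge1\}$ of closed subspaces such that every $x\in X$ has a unique expansion $x=\sum_{n\ge1}x_n$ with $x_n\in X_n$; $p_n(x)=x_n$ and $P_N=\sum_{n=1}^Np_n$ (the set $\{P_N:N\ge1\}$ is then bounded). $\mathcal{D}$ is $R$-Schauder if $\{P_N:N\ge1\}$ is $R$-bounded. A sectorial $\mathcal{D}$-multiplier is an operator $A$ of the form: for a nondecreasing sequence $(a_n)_{n\ge1}$ in $(0,\infty)$, $D(A)=\{x\in X:\sum_n a_np_n(x)\text{ converges}\}$ and $Ax=\sum_{n\ge1}a_np_n(x)$ (such $A$ is sectorial of type $0$). A Ritt $\mathcal{D}$-multiplier is an operator $T(x)=\sum_{n\ge1}c_np_n(x)$ with $(c_n)_{n\ge1}$ a nondecreasing sequence in $(0,1)$. *)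

From Stdlib Require Import Reals List.
Import ListNotations.
Open Scope R_scope.

Definition C := (R * R)%type.
Definition RtoC (r : R) : C := (r, 0).
Definition C1 : C := RtoC 1.
Definition Cadd (a b : C) : C := (fst a + fst b, snd a + snd b).
Definition Cminus (a b : C) : C := (fst a - fst b, snd a - snd b).
Definition Cmul (a b : C) : C :=
  (fst a * fst b - snd a * snd b, fst a * snd b + snd a * fst b).
Definition Cmod (a : C) : R := sqrt (fst a ^ 2 + snd a ^ 2).

Record CBanach := mkCBanach {
  vcar :> Type;
  vzero : vcar;
  vadd : vcar -> vcar -> vcar;
  vopp : vcar -> vcar;
  vscal : C -> vcar -> vcar;
  vnorm : vcar -> R;
  vadd_assoc : forall x y z, vadd x (vadd y z) = vadd (vadd x y) z;
  vadd_comm : forall x y, vadd x y = vadd y x;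
  vadd_0 : forall x, vadd x vzero = x;
  vadd_opp : forall x, vadd x (vopp x) = vzero;
  vscal_assoc : forall a b x, vscal a (vscal b x) = vscal (Cmul a b) x;
  vscal_1 : forall x, vscal C1 x = x;
  vscal_distr_v : forall a x y, vscal a (vadd x y) = vadd (vscal a x) (vscal a y);
  vscal_distr_s : forall a b x, vscal (Cadd a b) x = vadd (vscal a x) (vscal b x);
  vnorm_nonneg : forall x, 0 <= vnorm x;
  vnorm_eq0 : forall x, vnorm x = 0 -> x = vzero;
  vnorm_scal : forall a x, vnorm (vscal a x) = Cmod a * vnorm x;
  vnorm_triangle : forall x y, vnorm (vadd x y) <= vnorm x + vnorm y;
  vcomplete : forall u : nat -> vcar,
    (forall eps, 0 < eps -> exists N, forall m n, (N <= m)%nat -> (N <= n)%nat ->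
        vnorm (vadd (u m) (vopp (u n))) < eps) ->
    exists l, forall eps, 0 < eps -> exists N, forall n, (N <= n)%nat ->
        vnorm (vadd (u n) (vopp l)) < eps
}.

Arguments vzero {c}.
Arguments vadd {c}.
Arguments vopp {c}.
Arguments vscal {c}.
Arguments vnorm {c}.

Definition vsub {X : CBanach} (x y : X) : X := vadd x (vopp y).

Definition conv {X : CBanach} (u : nat -> X) (l : X) : Prop :=
  forall eps, 0 < eps -> exists N, forall n, (N <= n)%nat -> vnorm (vsub (u n) l) < eps.

Fixpoint psum {X : CBanach} (f : nat -> X) (N : nat) : X :=
  match N with
  | O => vzero
  | S N' => vadd (psum f N') (f N')
  end.

(** * Rademacher averages:
   || sum_j eps_j (x) x_j ||_{R,X} = E || sum_j eps_j x_j || = 2^{-k} sum over all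
   sign choices (exactly the integral over (Omega,P) for independent Rademachers). *)
Fixpoint all_signs (k : nat) : list (list bool) :=
  match k with
  | O => [[]]
  | S k' => map (cons true) (all_signs k') ++ map (cons false) (all_signs k')
  end.

Definition sgn (b : bool) : C := if b then RtoC 1 else RtoC (-1).

Fixpoint signed_sum {X : CBanach} (s : list bool) (xs : list X) : X :=
  match s, xs with
  | b :: s', x :: xs' => vadd (vscal (sgn b) x) (signed_sum s' xs')
  | _, _ => vzero
  end.

Definition rad_norm {X : CBanach} (xs : list X) : R :=
  / (2 ^ length xs) *
  fold_right Rplus 0 (map (fun s => vnorm (signed_sum s xs)) (all_signs (length xs))).

Definition R_bounded {X : CBanach} (F : (X -> X) -> Prop) : Prop :=
  exists K, forall ts : list ((X -> X) * X),
    (forall q, In q ts -> F (fst q)) ->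
    rad_norm (map (fun q => fst q (snd q)) ts) <= K * rad_norm (map snd ts).

Definition bounded_set {X : CBanach} (F : (X -> X) -> Prop) : Prop :=
  exists M, forall S, F S -> forall x, vnorm (S x) <= M * vnorm x.

Definition linear_op {X : CBanach} (T : X -> X) : Prop :=
  (forall x y, T (vadd x y) = vadd (T x) (T y)) /\
  (forall a x, T (vscal a x) = vscal a (T x)).

Definition bounded_op {X : CBanach} (T : X -> X) : Prop :=
  linear_op T /\ exists M, forall x, vnorm (T x) <= M * vnorm x.

Definition subspace {X : CBanach} (M : X -> Prop) : Prop :=
  M vzero /\ (forall x y, M x -> M y -> M (vadd x y)) /\
  (forall a x, M x -> M (vscal a x)).

Definition closed_set {X : CBanach} (M : X -> Prop) : Prop :=
  forall (u : nat -> X) l, (forall n, M (u n)) -> conv u l -> M l.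

(** D = {X_n} (indexed from 0 here) is a Schauder decomposition with
    coordinate projections p_n : every x has the unique expansion
    x = sum_n x_n, x_n in X_n, and p n x = x_n. *)
Definition Schauder {X : CBanach} (Xs : nat -> X -> Prop) (p : nat -> X -> X) : Prop :=
  (forall n, subspace (Xs n) /\ closed_set (Xs n)) /\
  (forall n x, Xs n (p n x)) /\
  (forall x, conv (psum (fun n => p n x)) x) /\
  (forall x (y : nat -> X), (forall n, Xs n (y n)) -> conv (psum y) x ->
       forall n, y n = p n x).

Definition partial_projs {X : CBanach} (p : nat -> X -> X) (S : X -> X) : Prop :=
  exists N, (1 <= N)%nat /\ forall x, S x = psum (fun n => p n x) N.

Definition R_Schauder {X : CBanach} (Xs : nat -> X -> Prop) (p : nat -> X -> X) : Prop :=
  Schauder Xs p /\ R_bounded (partial_projs p).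

(** Sigma_w = { lam <> 0 : |Arg lam| < w }, Arg the principal argument in (-pi, pi] *)
Definition sector (w : R) (lam : C) : Prop :=
  exists r phi, 0 < r /\ - PI < phi <= PI /\ Rabs phi < w /\
    lam = (r * cos phi, r * sin phi).

Definition csector (w : R) (lam : C) : Prop :=
  forall eps, 0 < eps -> exists mu, sector w mu /\ Cmod (Cminus lam mu) < eps.

(** * (Unbounded) operators: A with domain DA *)
Definition closed_densely_defined {X : CBanach} (DA : X -> Prop) (A : X -> X) : Prop :=
  subspace DA /\
  (forall x y, DA x -> DA y -> A (vadd x y) = vadd (A x) (A y)) /\
  (forall a x, DA x -> A (vscal a x) = vscal a (A x)) /\
  (forall (u : nat -> X) x y, (forall n, DA (u n)) -> conv u x ->
       conv (fun n => A (u n)) y -> DA x /\ A x = y) /\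
  (forall x eps, 0 < eps -> exists z, DA z /\ vnorm (vsub x z) < eps).

Definition resolvent_op {X : CBanach} (DA : X -> Prop) (A : X -> X) (lam : C)
    (R : X -> X) : Prop :=
  bounded_op R /\
  (forall x, DA (R x) /\ vsub (vscal lam (R x)) (A (R x)) = x) /\
  (forall z, DA z -> R (vsub (vscal lam z) (A z)) = z).

Definition in_resolvent_set {X : CBanach} (DA : X -> Prop) (A : X -> X) (lam : C) : Prop :=
  exists R, resolvent_op DA A lam R.

Definition sect_res_set {X : CBanach} (DA : X -> Prop) (A : X -> X) (theta : R)
    (S : X -> X) : Prop :=
  exists lam R, ~ csector theta lam /\ resolvent_op DA A lam R /\
    forall x, S x = vscal lam (R x).

Definition sectorial {X : CBanach} (w : R) (DA : X -> Prop) (A : X -> X) : Prop :=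
  closed_densely_defined DA A /\
  (forall lam, ~ csector w lam -> in_resolvent_set DA A lam) /\
  (forall theta, w < theta < PI -> bounded_set (sect_res_set DA A theta)).

Definition R_sectorial {X : CBanach} (w : R) (DA : X -> Prop) (A : X -> X) : Prop :=
  sectorial w DA A /\
  (forall theta, w < theta < PI -> R_bounded (sect_res_set DA A theta)).

Definition R_sectorial_type0 {X : CBanach} (DA : X -> Prop) (A : X -> X) : Prop :=
  forall w, 0 < w < PI -> R_sectorial w DA A.

Definition sect_multiplier {X : CBanach} (Xs : nat -> X -> Prop) (p : nat -> X -> X)
    (DA : X -> Prop) (A : X -> X) : Prop :=
  exists a : nat -> R,
    (forall n, 0 < a n) /\ (forall n, a n <= a (S n)) /\
    (forall x, DA x <-> exists l, conv (psum (fun n => vscal (RtoC (a n)) (p n x))) l) /\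
    (forall x, DA x -> conv (psum (fun n => vscal (RtoC (a n)) (p n x))) (A x)).

Definition powers {X : CBanach} (T : X -> X) (S : X -> X) : Prop :=
  exists n, forall x, S x = Nat.iter n T x.

Definition ritt_set {X : CBanach} (T : X -> X) (U : X -> X) : Prop :=
  exists n, (1 <= n)%nat /\
    forall x, U x = vscal (RtoC (INR n)) (vsub (Nat.iter n T x) (Nat.iter (S n) T x)).

Definition Ritt {X : CBanach} (T : X -> X) : Prop :=
  bounded_op T /\ bounded_set (powers T) /\ bounded_set (ritt_set T).

Definition R_Ritt {X : CBanach} (T : X -> X) : Prop :=
  bounded_op T /\ R_bounded (powers T) /\ R_bounded (ritt_set T).

Definition Ritt_multiplier {X : CBanach} (Xs : nat -> X -> Prop) (p : nat -> X -> X)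
    (T : X -> X) : Prop :=
  exists c : nat -> R,
    (forall n, 0 < c n < 1) /\ (forall n, c n <= c (S n)) /\
    (forall x, conv (psum (fun n => vscal (RtoC (c n)) (p n x))) (T x)).

From Pilot Require Import Defs.
From Stdlib Require Import Reals List.
From Stdlib Require Import Lra Lia Psatz ClassicalEpsilon Classical.
From Coquelicot Require Complex.
Import ListNotations.
Open Scope R_scope.

(** Let [P_N] be the partial-sum projections of an R-Schauder decomposition,
    with R-bound [K].  The whole proof rests on one estimate: if a complex
    sequence [m] satisfies [|m k| <= M] and has total variation [<= V], then
    the operators [x |-> sum_(k<N) m k p_k x] form an R-bounded family with
    R-bound [2 (M + V) K], and their pointwise limit exists.
    - Rademacher averages are symmetric and convex in each entry, so the
      absolutely convex hull of an R-bounded family has the same R-bound.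
    - By Abel summation, [sum_(k<N) r k p_k x] lies in [(M + V)] times that
      hull of [{P_N x}] for a real sequence [r]; a complex [m] is split into
      real and imaginary parts, which costs the factor [2].
    Part (b): [T^n] and [n (T^n - T^(n+1))] are the multipliers with symbols
    [c_k^n] (monotone in [k]) and [n (c_k^n - c_k^(n+1))] (unimodal in [k]),
    both of bounded variation uniformly in [n].
    Part (a): outside the closed sector of angle [theta], [lambda (lambda - A)^-1]
    is the multiplier with symbol [lambda / (lambda - a_k)], of modulus
    [<= 1 / sin theta] and of variation [<= 4 / sin^2 theta]. *)

Ltac cring := repeat match goal with
    c : Defs.C |- _ => lazymatch goal with |- context [c] => destruct c end end;
  unfold Cmul, Cadd, Cminus, RtoC, C1 in *; simpl; f_equal; ring.

Lemma vadd_0l {X : CBanach} (x : X) : vadd vzero x = x.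
Proof. rewrite vadd_comm; apply vadd_0. Qed.

Lemma vadd_oppl {X : CBanach} (x : X) : vadd (vopp x) x = vzero.
Proof. rewrite vadd_comm; apply vadd_opp. Qed.

Lemma vadd_cancel_l {X : CBanach} (a x y : X) : vadd a x = vadd a y -> x = y.
Proof.
  intros H. rewrite <- (vadd_0l x), <- (vadd_0l y), <- (vadd_oppl a).
  rewrite <- !vadd_assoc, H; reflexivity.
Qed.

Lemma vopp_unique {X : CBanach} (x y : X) : vadd x y = vzero -> y = vopp x.
Proof. intros H. apply (vadd_cancel_l x). now rewrite H, vadd_opp. Qed.

Lemma vopp_opp {X : CBanach} (x : X) : vopp (vopp x) = x.
Proof. symmetry. apply vopp_unique. apply vadd_oppl. Qed.

Lemma vadd_swap {X : CBanach} (a b c : X) : vadd a (vadd b c) = vadd b (vadd a c).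
Proof. rewrite !vadd_assoc, (vadd_comm _ a b); reflexivity. Qed.

Lemma vadd_4 {X : CBanach} (a b c d : X) :
  vadd (vadd a b) (vadd c d) = vadd (vadd a c) (vadd b d).
Proof. rewrite <- !vadd_assoc. f_equal. apply vadd_swap. Qed.

Lemma vopp_add {X : CBanach} (x y : X) : vopp (vadd x y) = vadd (vopp x) (vopp y).
Proof. symmetry; apply vopp_unique. rewrite vadd_4, !vadd_opp, vadd_0; reflexivity. Qed.

Lemma vopp_zero {X : CBanach} : vopp (@vzero X) = vzero.
Proof. symmetry; apply vopp_unique; apply vadd_0. Qed.

Lemma vadd_idem_zero {X : CBanach} (x : X) : vadd x x = x -> x = vzero.
Proof. intros H. rewrite <- (vadd_0 _ x) in H at 3. now apply vadd_cancel_l in H. Qed.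

Lemma vscal_zero_v {X : CBanach} a : vscal a (@vzero X) = vzero.
Proof. apply vadd_idem_zero. rewrite <- vscal_distr_v, vadd_0; reflexivity. Qed.

Lemma vscal_eqC {X : CBanach} a b (x : X) : a = b -> vscal a x = vscal b x.
Proof. intros ->; reflexivity. Qed.

Lemma vscal_0 {X : CBanach} (x : X) : vscal (RtoC 0) x = vzero.
Proof. apply vadd_idem_zero. rewrite <- vscal_distr_s. apply vscal_eqC; cring. Qed.

Lemma vscal_opp_v {X : CBanach} a (x : X) : vscal a (vopp x) = vopp (vscal a x).
Proof. apply vopp_unique. rewrite <- vscal_distr_v, vadd_opp. apply vscal_zero_v. Qed.

Lemma vscal_m1 {X : CBanach} (x : X) : vscal (RtoC (-1)) x = vopp x.
Proof.
  apply vopp_unique. rewrite <- (vscal_1 _ x) at 1. rewrite <- vscal_distr_s.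
  rewrite <- (vscal_0 x). apply vscal_eqC; cring.
Qed.

Lemma vscal_comm {X : CBanach} a b (z : X) : vscal a (vscal b z) = vscal b (vscal a z).
Proof. rewrite !vscal_assoc. apply vscal_eqC. cring. Qed.

Lemma rs_1 {X : CBanach} (x : X) : vscal (RtoC 1) x = x.
Proof. apply vscal_1. Qed.

Lemma rs_mul {X : CBanach} a b (x : X) :
  vscal (RtoC a) (vscal (RtoC b) x) = vscal (RtoC (a * b)) x.
Proof. rewrite vscal_assoc. apply vscal_eqC; cring. Qed.

Lemma rs_add {X : CBanach} a b (x : X) :
  vscal (RtoC (a + b)) x = vadd (vscal (RtoC a) x) (vscal (RtoC b) x).
Proof. rewrite <- vscal_distr_s. apply vscal_eqC; cring. Qed.

Lemma rs_opp {X : CBanach} a (x : X) : vscal (RtoC (- a)) x = vopp (vscal (RtoC a) x).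
Proof. rewrite <- vscal_m1, rs_mul. apply vscal_eqC; cring. Qed.

Lemma vsub_diag {X : CBanach} (x : X) : vsub x x = vzero.
Proof. apply vadd_opp. Qed.

Lemma vsub_opp {X : CBanach} (x y : X) : vopp (vsub x y) = vsub y x.
Proof. unfold vsub. rewrite vopp_add, vopp_opp, vadd_comm; reflexivity. Qed.

Lemma vsub_eq0 {X : CBanach} (x y : X) : vsub x y = vzero -> x = y.
Proof.
  unfold vsub; intros H. apply vopp_unique in H.
  rewrite <- (vopp_opp x), <- H, vopp_opp; reflexivity.
Qed.

Lemma vsub_add_add {X : CBanach} (a b c d : X) :
  vsub (vadd a b) (vadd c d) = vadd (vsub a c) (vsub b d).
Proof. unfold vsub. rewrite vopp_add, vadd_4; reflexivity. Qed.

Lemma vsub_scal {X : CBanach} a (x y : X) : vsub (vscal a x) (vscal a y) = vscal a (vsub x y).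
Proof. unfold vsub. rewrite vscal_distr_v, vscal_opp_v; reflexivity. Qed.

Lemma vsub_scal_r {X : CBanach} u w (v : X) : vsub (vscal u v) (vscal w v) = vscal (Cminus u w) v.
Proof. unfold vsub. rewrite <- vscal_m1, vscal_assoc, <- vscal_distr_s. apply vscal_eqC. cring. Qed.

Lemma rs_sub {X : CBanach} a b (v : X) :
  vsub (vscal (RtoC a) v) (vscal (RtoC b) v) = vscal (RtoC (a - b)) v.
Proof. unfold vsub, Rminus. rewrite rs_add, rs_opp; auto. Qed.


Lemma Cmod_RtoC r : Cmod (RtoC r) = Rabs r.
Proof. apply Complex.Cmod_R. Qed.

Lemma Cmod_nonneg a : 0 <= Cmod a.
Proof. apply Complex.Cmod_ge_0. Qed.

Lemma vnorm_zero {X : CBanach} : vnorm (@vzero X) = 0.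
Proof. rewrite <- (vscal_0 vzero), vnorm_scal, Cmod_RtoC, Rabs_R0; ring. Qed.

Lemma vnorm_opp {X : CBanach} (x : X) : vnorm (vopp x) = vnorm x.
Proof.
  rewrite <- vscal_m1, vnorm_scal, Cmod_RtoC.
  replace (Rabs (-1)) with 1 by (unfold Rabs; destruct Rcase_abs; lra); ring.
Qed.

Lemma vnorm_sub_sym {X : CBanach} (x y : X) : vnorm (vsub x y) = vnorm (vsub y x).
Proof. rewrite <- vsub_opp, vnorm_opp; reflexivity. Qed.

Lemma vnorm_sub_eq0 {X : CBanach} (x y : X) : vnorm (vsub x y) = 0 -> x = y.
Proof. intros H; apply vsub_eq0, vnorm_eq0, H. Qed.

Lemma vsub_triangle {X : CBanach} (x y z : X) :
  vnorm (vsub x z) <= vnorm (vsub x y) + vnorm (vsub y z).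
Proof.
  replace (vsub x z) with (vadd (vsub x y) (vsub y z)). apply vnorm_triangle.
  unfold vsub. rewrite <- vadd_assoc, (vadd_assoc _ (vopp y)), vadd_oppl, vadd_0l; reflexivity.
Qed.

Lemma vnorm_triangle_sub {X : CBanach} (x y : X) : vnorm x <= vnorm y + vnorm (vsub x y).
Proof.
  replace x with (vadd y (vsub x y)) at 1. apply vnorm_triangle.
  unfold vsub. rewrite vadd_swap, vadd_opp, vadd_0; reflexivity.
Qed.

Fixpoint sumR (f : nat -> R) (N : nat) : R :=
  match N with O => 0 | S n => sumR f n + f n end.

Lemma sumR_ext f g N : (forall k, (k < N)%nat -> f k = g k) -> sumR f N = sumR g N.
Proof.
  induction N; simpl; intros H; auto.
  rewrite IHN by (intros; apply H; lia). rewrite H by lia; auto.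
Qed.

Lemma sumR_nonneg f N : (forall k, 0 <= f k) -> 0 <= sumR f N.
Proof. intros H; induction N; simpl; [lra| specialize (H N); lra]. Qed.

Lemma sumR_le f g N : (forall k, f k <= g k) -> sumR f N <= sumR g N.
Proof. intros H; induction N; simpl; [lra| specialize (H N); lra]. Qed.

Lemma sumR_telescope (u : nat -> R) N : sumR (fun k => u (S k) - u k) N = u N - u O.
Proof. induction N; simpl; [ring| rewrite IHN; ring]. Qed.

Lemma psum_ext {X : CBanach} (f g : nat -> X) N :
  (forall k, (k < N)%nat -> f k = g k) -> psum f N = psum g N.
Proof.
  induction N; simpl; intros H; auto.
  rewrite IHN by (intros; apply H; lia). rewrite H by lia; auto.
Qed.

Lemma psum_add {X : CBanach} (f g : nat -> X) N :
  psum (fun n => vadd (f n) (g n)) N = vadd (psum f N) (psum g N).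
Proof. induction N; simpl. rewrite vadd_0; auto. rewrite IHN, vadd_4; auto. Qed.

Lemma psum_scal {X : CBanach} a (f : nat -> X) N :
  psum (fun n => vscal a (f n)) N = vscal a (psum f N).
Proof. induction N; simpl. rewrite vscal_zero_v; auto. rewrite IHN, vscal_distr_v; auto. Qed.

Lemma psum_opp {X : CBanach} (f : nat -> X) N :
  psum (fun n => vopp (f n)) N = vopp (psum f N).
Proof. induction N; simpl. rewrite vopp_zero; auto. rewrite IHN, vopp_add; auto. Qed.

Lemma psum_sub {X : CBanach} (f g : nat -> X) N :
  psum (fun n => vsub (f n) (g n)) N = vsub (psum f N) (psum g N).
Proof. unfold vsub. rewrite psum_add, psum_opp; auto. Qed.

Lemma psum_zero {X : CBanach} N : psum (fun _ => @vzero X) N = vzero.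
Proof. induction N; simpl; auto. rewrite IHN, vadd_0; auto. Qed.

Lemma psum_trunc {X : CBanach} (f g : nat -> X) m n :
  (forall k, g k = if Nat.ltb k m then f k else vzero) -> (m <= n)%nat ->
  psum g n = psum f m.
Proof.
  intros Hg Hle. induction Hle.
  - apply psum_ext. intros k Hk. rewrite Hg. destruct (Nat.ltb_spec k m); [auto| lia].
  - simpl. rewrite IHHle, Hg. destruct (Nat.ltb_spec m0 m); [lia| apply vadd_0].
Qed.

Lemma psum_single {X : CBanach} (g : nat -> X) k v N :
  (forall j, g j = if Nat.eqb j k then v else vzero) -> (S k <= N)%nat -> psum g N = v.
Proof.
  intros Hg HN. rewrite (psum_trunc (fun j => if Nat.eqb j k then v else vzero) g (S k) N); auto.
  - simpl. rewrite Nat.eqb_refl, (psum_ext _ (fun _ => vzero)), psum_zero, vadd_0l; auto.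
    intros j Hj. destruct (Nat.eqb_spec j k); [lia| auto].
  - intros j. rewrite Hg. destruct (Nat.ltb_spec j (S k)); auto.
    destruct (Nat.eqb_spec j k); [lia| auto].
Qed.

Definition additive {X : CBanach} (T : X -> X) := forall x y, T (vadd x y) = vadd (T x) (T y).

Lemma additive_zero {X : CBanach} (T : X -> X) : additive T -> T vzero = vzero.
Proof. intros H. apply vadd_idem_zero. rewrite <- H, vadd_0; auto. Qed.

Lemma additive_sub {X : CBanach} (T : X -> X) :
  additive T -> forall x y, T (vsub x y) = vsub (T x) (T y).
Proof.
  intros Ha x y. unfold vsub. apply (vadd_cancel_l (T y)).
  rewrite <- Ha, vadd_swap, vadd_opp, vadd_0, vadd_swap, vadd_opp, vadd_0; auto.
Qed.

Lemma psum_map {X : CBanach} (T : X -> X) f N :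
  additive T -> T (psum f N) = psum (fun n => T (f n)) N.
Proof. intros H; induction N; simpl. apply additive_zero, H. rewrite H, IHN; auto. Qed.

Lemma conv_unique {X : CBanach} (u : nat -> X) l1 l2 : conv u l1 -> conv u l2 -> l1 = l2.
Proof.
  intros H1 H2. apply vnorm_sub_eq0.
  destruct (Rle_lt_or_eq_dec 0 (vnorm (vsub l1 l2)) (vnorm_nonneg _ _)) as [Hp|Hz];
    [|symmetry; exact Hz].
  exfalso. set (e := vnorm (vsub l1 l2)) in *.
  destruct (H1 (e/2)) as [N1 HN1]; [lra|]. destruct (H2 (e/2)) as [N2 HN2]; [lra|].
  specialize (HN1 (N1+N2)%nat ltac:(lia)). specialize (HN2 (N1+N2)%nat ltac:(lia)).
  pose proof (vsub_triangle l1 (u (N1+N2)%nat) l2).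
  rewrite (vnorm_sub_sym l1 (u _)) in H. unfold e in *. lra.
Qed.

Lemma conv_ext {X : CBanach} (u v : nat -> X) l :
  (forall n, u n = v n) -> conv u l -> conv v l.
Proof.
  intros He H eps Heps. destruct (H eps Heps) as [N HN].
  exists N; intros n Hn. rewrite <- He; auto.
Qed.

Lemma conv_eventually {X : CBanach} (u : nat -> X) l N0 :
  (forall n, (N0 <= n)%nat -> u n = l) -> conv u l.
Proof. intros H eps Heps. exists N0. intros n Hn. rewrite H, vsub_diag, vnorm_zero; auto. Qed.

Lemma conv_add {X : CBanach} (u v : nat -> X) l1 l2 :
  conv u l1 -> conv v l2 -> conv (fun n => vadd (u n) (v n)) (vadd l1 l2).
Proof.
  intros H1 H2 eps Heps.
  destruct (H1 (eps/2)) as [N1 HN1]; [lra|]. destruct (H2 (eps/2)) as [N2 HN2]; [lra|].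
  exists (N1+N2)%nat. intros n Hn. rewrite vsub_add_add.
  eapply Rle_lt_trans. apply vnorm_triangle.
  specialize (HN1 n ltac:(lia)). specialize (HN2 n ltac:(lia)). lra.
Qed.

Lemma conv_op {X : CBanach} (T : X -> X) M (u : nat -> X) l :
  additive T -> (forall x, vnorm (T x) <= M * vnorm x) ->
  conv u l -> conv (fun n => T (u n)) (T l).
Proof.
  intros Ha Hb H eps Heps. set (M' := Rabs M + 1).
  assert (HM' : 0 < M') by (pose proof (Rabs_pos M); unfold M'; lra).
  destruct (H (eps / M')) as [N HN]; [apply Rdiv_lt_0_compat; lra|].
  exists N. intros n Hn. rewrite <- additive_sub by exact Ha.
  eapply Rle_lt_trans. apply Hb.
  specialize (HN n Hn). pose proof (vnorm_nonneg _ (vsub (u n) l)).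
  apply Rle_lt_trans with (M' * vnorm (vsub (u n) l)).
  - apply Rmult_le_compat_r; [auto| pose proof (Rle_abs M); unfold M'; lra].
  - apply Rlt_le_trans with (M' * (eps / M')).
    + apply Rmult_lt_compat_l; auto.
    + right; field; lra.
Qed.

Lemma conv_scal {X : CBanach} a (u : nat -> X) l :
  conv u l -> conv (fun n => vscal a (u n)) (vscal a l).
Proof.
  apply (conv_op (vscal a) (Cmod a)).
  - intros x y; apply vscal_distr_v.
  - intros x; rewrite vnorm_scal; lra.
Qed.

Lemma conv_sub {X : CBanach} (u v : nat -> X) l1 l2 :
  conv u l1 -> conv v l2 -> conv (fun n => vsub (u n) (v n)) (vsub l1 l2).
Proof.
  intros H1 H2. apply conv_add; auto.
  apply conv_ext with (fun n => vscal (RtoC (-1)) (v n)); [intros; apply vscal_m1|].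
  rewrite <- vscal_m1. apply conv_scal, H2.
Qed.

Lemma conv_le {X : CBanach} (u : nat -> X) l B :
  conv u l -> (forall n, vnorm (u n) <= B) -> vnorm l <= B.
Proof.
  intros H Hb. apply Rnot_lt_le; intros Hlt.
  destruct (H (vnorm l - B)) as [N HN]; [lra|].
  specialize (HN N (le_n _)). specialize (Hb N).
  pose proof (vnorm_triangle_sub l (u N)). rewrite vnorm_sub_sym in H0. lra.
Qed.

Definition proj_sum {X : CBanach} (p : nat -> X -> X) (N : nat) (x : X) : X :=
  psum (fun n => p n x) N.

Definition mult_sum {X : CBanach} (p : nat -> X -> X) (m : nat -> Defs.C) (x : X) (N : nat) : X :=
  psum (fun k => vscal (m k) (p k x)) N.

Section SchauderProjections.

Context {X : CBanach} {Xs : nat -> X -> Prop} {p : nat -> X -> X}.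
Hypothesis Hs : Schauder Xs p.

Let sch_sub : forall n, subspace (Xs n).
Proof. destruct Hs as [H _]; apply H. Qed.

Let sch_in : forall n x, Xs n (p n x).
Proof. destruct Hs as [_ [H _]]; apply H. Qed.

Lemma sch_conv : forall x, conv (psum (fun n => p n x)) x.
Proof. destruct Hs as [_ [_ [H _]]]; apply H. Qed.

Lemma sch_uniq :
  forall x (y : nat -> X), (forall n, Xs n (y n)) -> conv (psum y) x -> forall n, y n = p n x.
Proof. destruct Hs as [_ [_ [_ H]]]; apply H. Qed.

Lemma p_add : forall n x y, p n (vadd x y) = vadd (p n x) (p n y).
Proof.
  intros n x y. symmetry. apply (sch_uniq (vadd x y) (fun n => vadd (p n x) (p n y))).
  - intros k. destruct (sch_sub k) as [_ [Ha _]]. apply Ha; apply sch_in.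
  - eapply conv_ext. intros; symmetry; apply psum_add. apply conv_add; apply sch_conv.
Qed.

Lemma p_scal : forall n a x, p n (vscal a x) = vscal a (p n x).
Proof.
  intros n a x. symmetry. apply (sch_uniq (vscal a x) (fun n => vscal a (p n x))).
  - intros k. destruct (sch_sub k) as [_ [_ Ha]]. apply Ha; apply sch_in.
  - eapply conv_ext. intros; symmetry; apply psum_scal. apply conv_scal; apply sch_conv.
Qed.

Lemma p_sub : forall n x y, p n (vsub x y) = vsub (p n x) (p n y).
Proof. intros n x y. unfold vsub. rewrite p_add, <- !vscal_m1, p_scal; auto. Qed.

Lemma p_proj : forall n k x, p n (p k x) = if Nat.eqb n k then p k x else vzero.
Proof.
  intros n k x. symmetry.
  apply (sch_uniq (p k x) (fun n => if Nat.eqb n k then p k x else vzero)).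
  - intros j. destruct (Nat.eqb_spec j k); [subst; apply sch_in|].
    destruct (sch_sub j) as [H0 _]; auto.
  - apply conv_eventually with (S k). intros m Hm. apply psum_single with k; auto.
Qed.

Lemma p_proj_sum : forall k m x, p k (proj_sum p m x) = if Nat.ltb k m then p k x else vzero.
Proof.
  intros k m x. unfold proj_sum. rewrite psum_map by (intros y z; apply p_add).
  induction m; simpl.
  - destruct k; auto.
  - rewrite IHm, p_proj.
    destruct (Nat.ltb_spec k m), (Nat.eqb_spec k m), (Nat.ltb_spec k (S m)); try lia; subst.
    + rewrite vadd_0; auto.
    + rewrite vadd_0l; auto.
    + rewrite vadd_0; auto.
Qed.

Lemma mult_sum_add : forall m x y N,
  mult_sum p m (vadd x y) N = vadd (mult_sum p m x N) (mult_sum p m y N).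
Proof.
  intros m x y N. unfold mult_sum. rewrite <- psum_add. apply psum_ext; intros k _.
  rewrite p_add, vscal_distr_v; auto.
Qed.

Lemma mult_sum_scal : forall m c x N,
  mult_sum p m (vscal c x) N = vscal c (mult_sum p m x N).
Proof.
  intros m c x N. unfold mult_sum. rewrite <- psum_scal. apply psum_ext; intros k _.
  rewrite p_scal, vscal_comm; auto.
Qed.

Lemma mult_sum_tail : forall m x a b, (b <= a)%nat ->
  vsub (mult_sum p m x a) (mult_sum p m x b) = mult_sum p m (vsub x (proj_sum p b x)) a.
Proof.
  intros m x a b Hab.
  assert (Hproj : mult_sum p m (proj_sum p b x) a = mult_sum p m x b).
  { unfold mult_sum. apply psum_trunc; auto.
    intros k. rewrite p_proj_sum. destruct (Nat.ltb k b); auto. apply vscal_zero_v. }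
  rewrite <- Hproj. unfold mult_sum. rewrite <- psum_sub.
  apply psum_ext; intros k _. rewrite p_sub, vsub_scal; auto.
Qed.

Lemma mult_sum_coord : forall m x l, conv (mult_sum p m x) l ->
  forall k, p k l = vscal (m k) (p k x).
Proof.
  intros m x l H k. symmetry. apply (sch_uniq l (fun k => vscal (m k) (p k x))); auto.
  intros j. destruct (sch_sub j) as [_ [_ Ha]]. apply Ha; apply sch_in.
Qed.

End SchauderProjections.

(** * Rademacher averages *)

Definition sumL {A} (g : A -> R) (L : list A) : R := fold_right Rplus 0 (map g L).

Lemma sumL_ext {A} (g h : A -> R) L : (forall s, g s = h s) -> sumL g L = sumL h L.
Proof. intros H; unfold sumL; induction L; simpl; auto. rewrite H, IHL; auto. Qed.

Lemma sumL_le {A} (g h : A -> R) L : (forall s, g s <= h s) -> sumL g L <= sumL h L.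
Proof. intros H; unfold sumL; induction L; simpl; [lra| specialize (H a); lra]. Qed.

Lemma sumL_lin {A} (g h : A -> R) c1 c2 d L :
  sumL (fun s => c1 * g s + c2 * h s + d) L = c1 * sumL g L + c2 * sumL h L + d * INR (length L).
Proof.
  induction L; unfold sumL in *; simpl. ring. rewrite IHL. destruct (length L); simpl; ring.
Qed.

Lemma sumL_app {A} (g : A -> R) L1 L2 : sumL g (L1 ++ L2) = sumL g L1 + sumL g L2.
Proof. unfold sumL; induction L1; simpl; [ring| rewrite IHL1; ring]. Qed.

Lemma sumL_map {A B} (g : A -> R) (f : B -> A) L : sumL g (map f L) = sumL (fun s => g (f s)) L.
Proof. unfold sumL. rewrite map_map; auto. Qed.

Lemma length_all_signs n : INR (length (all_signs n)) = 2 ^ n.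
Proof. induction n; simpl; auto. rewrite length_app, !length_map, plus_INR, IHn; ring. Qed.

Lemma rad_norm_eq {X : CBanach} (xs : list X) :
  rad_norm xs = / 2 ^ length xs * sumL (fun s => vnorm (signed_sum s xs)) (all_signs (length xs)).
Proof. reflexivity. Qed.

Lemma rad_norm_le2 {X : CBanach} (L L1 L2 : list X) c1 c2 d :
  length L1 = length L -> length L2 = length L -> 0 <= c1 -> 0 <= c2 ->
  (forall s, vnorm (signed_sum s L) <=
     c1 * vnorm (signed_sum s L1) + c2 * vnorm (signed_sum s L2) + d) ->
  rad_norm L <= c1 * rad_norm L1 + c2 * rad_norm L2 + d.
Proof.
  intros E1 E2 H1 H2 H. rewrite !rad_norm_eq, E1, E2.
  pose proof (pow_lt 2 (length L) ltac:(lra)).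
  eapply Rle_trans.
  - apply Rmult_le_compat_l; [left; apply Rinv_0_lt_compat; auto|]. apply sumL_le, H.
  - rewrite sumL_lin, length_all_signs. right. field. lra.
Qed.

Lemma rad_norm_nonneg {X : CBanach} (xs : list X) : 0 <= rad_norm xs.
Proof.
  rewrite rad_norm_eq. apply Rmult_le_pos; [left; apply Rinv_0_lt_compat, pow_lt; lra|].
  unfold sumL. induction (all_signs (length xs)); simpl; [lra|].
  pose proof (vnorm_nonneg _ (signed_sum a xs)). lra.
Qed.

Lemma rad_single {X : CBanach} (y : X) : rad_norm [y] = vnorm y.
Proof.
  unfold rad_norm. simpl. rewrite !vadd_0. unfold sgn.
  rewrite vscal_m1, vnorm_opp. change (RtoC 1) with Defs.C1. rewrite vscal_1. field.
Qed.

Lemma sgn_mod b : Cmod (sgn b) = 1.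
Proof.
  destruct b; simpl; rewrite Cmod_RtoC; [apply Rabs_R1| unfold Rabs; destruct Rcase_abs; lra].
Qed.

Lemma signed_sum_add {X : CBanach} {T} (f g : T -> X) s l :
  signed_sum s (map (fun q => vadd (f q) (g q)) l) =
  vadd (signed_sum s (map f l)) (signed_sum s (map g l)).
Proof.
  revert l; induction s; intros l; destruct l; simpl; try (rewrite vadd_0; reflexivity).
  rewrite IHs, vscal_distr_v, vadd_4; reflexivity.
Qed.

Lemma signed_sum_scal {X : CBanach} {T} (f : T -> X) c s l :
  signed_sum s (map (fun q => vscal c (f q)) l) = vscal c (signed_sum s (map f l)).
Proof.
  revert l; induction s; intros l; destruct l; simpl; try (rewrite vscal_zero_v; reflexivity).
  rewrite IHs, vscal_distr_v, vscal_comm; reflexivity.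
Qed.

Lemma signed_sum_sub {X : CBanach} {T} (f g : T -> X) s l :
  signed_sum s (map (fun q => vsub (f q) (g q)) l) =
  vsub (signed_sum s (map f l)) (signed_sum s (map g l)).
Proof.
  unfold vsub. rewrite signed_sum_add. f_equal. rewrite <- vscal_m1, <- signed_sum_scal.
  f_equal. apply map_ext; intros; symmetry; apply vscal_m1.
Qed.

Lemma vnorm_signed_sum_le {X : CBanach} s (xs : list X) :
  vnorm (signed_sum s xs) <= sumL vnorm xs.
Proof.
  assert (Hn : forall xs : list X, 0 <= sumL vnorm xs).
  { intros xs0; unfold sumL; induction xs0; simpl; [lra| pose proof (vnorm_nonneg _ a); lra]. }
  revert xs; induction s; intros xs; destruct xs; simpl; try (rewrite vnorm_zero; apply Hn).
  eapply Rle_trans. apply vnorm_triangle.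
  rewrite vnorm_scal, sgn_mod. specialize (IHs xs). unfold sumL in *; simpl. lra.
Qed.

Lemma rad_add {X : CBanach} {T} (f g : T -> X) l :
  rad_norm (map (fun q => vadd (f q) (g q)) l) <= rad_norm (map f l) + rad_norm (map g l).
Proof.
  replace (rad_norm (map f l) + rad_norm (map g l))
    with (1 * rad_norm (map f l) + 1 * rad_norm (map g l) + 0) by ring.
  apply rad_norm_le2; rewrite ?length_map; auto; try lra.
  intros s. rewrite signed_sum_add.
  pose proof (vnorm_triangle _ (signed_sum s (map f l)) (signed_sum s (map g l))). lra.
Qed.

Lemma rad_scal {X : CBanach} {T} (f : T -> X) c l :
  rad_norm (map (fun q => vscal c (f q)) l) <= Cmod c * rad_norm (map f l).
Proof.
  replace (Cmod c * rad_norm (map f l))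
    with (Cmod c * rad_norm (map f l) + 0 * rad_norm (map f l) + 0) by ring.
  apply rad_norm_le2; rewrite ?length_map; auto; try lra. apply Cmod_nonneg.
  intros s. rewrite signed_sum_scal, vnorm_scal. lra.
Qed.

Lemma rad_lip {X : CBanach} {T} (f g : T -> X) l :
  rad_norm (map f l) <= rad_norm (map g l) + sumL (fun q => vnorm (vsub (f q) (g q))) l.
Proof.
  replace (rad_norm (map g l) + sumL (fun q => vnorm (vsub (f q) (g q))) l) with
    (1 * rad_norm (map g l) + 0 * rad_norm (map g l) +
     sumL (fun q => vnorm (vsub (f q) (g q))) l) by ring.
  apply rad_norm_le2; rewrite ?length_map; auto; try lra.
  intros s. pose proof (vnorm_triangle_sub (signed_sum s (map f l)) (signed_sum s (map g l))).
  rewrite <- signed_sum_sub in H.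
  pose proof (vnorm_signed_sum_le s (map (fun q => vsub (f q) (g q)) l)).
  unfold sumL in *. rewrite map_map in H0. lra.
Qed.

Lemma signed_sum_affine {X : CBanach} t (z1 z2 : X) B : forall A s,
  signed_sum s (A ++ vadd (vscal (RtoC t) z1) (vscal (RtoC (1-t)) z2) :: B) =
  vadd (vscal (RtoC t) (signed_sum s (A ++ z1 :: B)))
       (vscal (RtoC (1-t)) (signed_sum s (A ++ z2 :: B))).
Proof.
  assert (aff : forall a b c : X,
    vadd (vscal (RtoC t) (vadd a b)) (vscal (RtoC (1-t)) (vadd a c)) =
    vadd a (vadd (vscal (RtoC t) b) (vscal (RtoC (1-t)) c))).
  { intros a b c. rewrite !vscal_distr_v, vadd_4, <- rs_add.
    replace (t + (1-t)) with 1 by ring. rewrite rs_1; auto. }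
  induction A; intros s; destruct s as [|b s]; simpl;
    try (rewrite !vscal_zero_v, vadd_0; reflexivity).
  - rewrite (vadd_comm _ (vscal (sgn b) z1)), (vadd_comm _ (vscal (sgn b) z2)), aff, vadd_comm.
    rewrite vscal_distr_v, !(vscal_comm (sgn b)); reflexivity.
  - rewrite IHA, aff; reflexivity.
Qed.

Lemma rad_convex_coord {X : CBanach} (A B : list X) z1 z2 t : 0 <= t <= 1 ->
  rad_norm (A ++ vadd (vscal (RtoC t) z1) (vscal (RtoC (1-t)) z2) :: B) <=
  t * rad_norm (A ++ z1 :: B) + (1 - t) * rad_norm (A ++ z2 :: B).
Proof.
  intros Ht. rewrite <- (Rplus_0_r (_ + _)).
  apply rad_norm_le2; rewrite ?length_app; simpl; auto; try lra.
  intros s. rewrite signed_sum_affine. eapply Rle_trans. apply vnorm_triangle.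
  rewrite !vnorm_scal, !Cmod_RtoC, !Rabs_right by lra. lra.
Qed.

(** Flipping the sign of one entry permutes the sign vectors; stated with an
    extra summand [v] so that the induction goes through. *)
Lemma rad_sign_coord_gen {X : CBanach} (z : X) B : forall A (v : X),
  sumL (fun s => vnorm (vadd v (signed_sum s (A ++ vopp z :: B))))
       (all_signs (length A + S (length B))) =
  sumL (fun s => vnorm (vadd v (signed_sum s (A ++ z :: B))))
       (all_signs (length A + S (length B))).
Proof.
  induction A; intros v; simpl; rewrite !sumL_app, !sumL_map; simpl.
  - rewrite Rplus_comm. f_equal; apply sumL_ext; intros s; unfold sgn.
    + rewrite vscal_m1, vopp_opp, rs_1; auto.
    + rewrite rs_1, vscal_m1; auto.
  - f_equal; erewrite !(sumL_ext (fun s => vnorm (vadd v _)))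
      by (intros; rewrite vadd_assoc; reflexivity); apply IHA.
Qed.

Lemma rad_sign_coord {X : CBanach} (A B : list X) z :
  rad_norm (A ++ vopp z :: B) = rad_norm (A ++ z :: B).
Proof.
  rewrite !rad_norm_eq, !length_app. simpl. f_equal.
  pose proof (rad_sign_coord_gen z B A vzero) as H.
  erewrite !(sumL_ext (fun s => vnorm (vadd vzero _))) in H
    by (intros; rewrite vadd_0l; reflexivity). exact H.
Qed.

(** * The absolutely convex hull of an R-bounded family *)

Definition R_bound_by {X : CBanach} (F : (X -> X) -> Prop) (K : R) : Prop :=
  forall ts : list ((X -> X) * X), (forall q, In q ts -> F (fst q)) ->
    rad_norm (map (fun q => fst q (snd q)) ts) <= K * rad_norm (map snd ts).

Inductive abs_hull {X : CBanach} (F : (X -> X) -> Prop) (x : X) : X -> Prop :=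
| abs_hull_op : forall S, F S -> abs_hull F x (S x)
| abs_hull_opp : forall y, abs_hull F x y -> abs_hull F x (vopp y)
| abs_hull_cv : forall t y1 y2, 0 <= t <= 1 -> abs_hull F x y1 -> abs_hull F x y2 ->
    abs_hull F x (vadd (vscal (RtoC t) y1) (vscal (RtoC (1-t)) y2)).

(** Replacing, one entry at a time, the images [S x] by hull elements keeps the
    R-bound, since Rademacher averages are symmetric and convex in each entry;
    [l1] collects the entries already treated. *)
Lemma abs_hull_R_bound_gen {X : CBanach} (F : (X -> X) -> Prop) K : R_bound_by F K ->
  forall l2 : list (X * X), (forall q, In q l2 -> abs_hull F (fst q) (snd q)) ->
  forall l1 : list ((X -> X) * X), (forall q, In q l1 -> F (fst q)) ->
  rad_norm (map (fun q => fst q (snd q)) l1 ++ map snd l2) <=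
  K * rad_norm (map snd l1 ++ map fst l2).
Proof.
  intros HK. induction l2 as [|[x y] l2 IH]; intros Hl2 l1 Hl1.
  - simpl; rewrite !app_nil_r. apply HK; auto.
  - simpl. assert (Hy : abs_hull F x y) by (apply (Hl2 (x,y)); left; auto).
    assert (Hl2' : forall q, In q l2 -> abs_hull F (fst q) (snd q))
      by (intros; apply Hl2; right; auto).
    clear Hl2. induction Hy.
    + specialize (IH Hl2' (l1 ++ [(S, x)])).
      rewrite !map_app in IH. simpl in IH. rewrite <- !app_assoc in IH. apply IH.
      intros q Hq. apply in_app_or in Hq. destruct Hq as [Hq|[<-|[]]]; auto.
    + rewrite rad_sign_coord; auto.
    + eapply Rle_trans. apply rad_convex_coord; auto.
      pose proof (rad_norm_nonneg (map snd l1 ++ x :: map fst l2)). nra.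
Qed.

Lemma abs_hull_R_bound {X : CBanach} (F : (X -> X) -> Prop) K : R_bound_by F K ->
  forall l : list (X * X), (forall q, In q l -> abs_hull F (fst q) (snd q)) ->
  rad_norm (map snd l) <= K * rad_norm (map fst l).
Proof. intros HK l Hl. apply (abs_hull_R_bound_gen F K HK l Hl nil). intros _ []. Qed.

Definition scaled_hull {X : CBanach} (F : (X -> X) -> Prop) (x y : X) (W : R) : Prop :=
  exists z, abs_hull F x z /\ y = vscal (RtoC W) z.

Section ScaledHull.

Context {X : CBanach} {F : (X -> X) -> Prop} {x : X}.
(** The hull is assumed nonempty, so that it contains [0]. *)
Hypothesis Hne : exists y, abs_hull F x y.

Lemma abs_hull_zero : abs_hull F x vzero.
Proof.
  destruct Hne as [y Hy].
  replace vzero with (vadd (vscal (RtoC (1/2)) y) (vscal (RtoC (1 - 1/2)) (vopp y))).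
  - apply abs_hull_cv; auto; try lra. apply abs_hull_opp; auto.
  - rewrite vscal_opp_v. replace (1 - 1/2) with (1/2) by field. apply vadd_opp.
Qed.

Lemma abs_hull_rscal c y : Rabs c <= 1 -> abs_hull F x y -> abs_hull F x (vscal (RtoC c) y).
Proof.
  intros Hc Hy. assert (- 1 <= c <= 1) by (revert Hc; unfold Rabs; destruct Rcase_abs; intros; lra).
  replace (vscal (RtoC c) y)
    with (vadd (vscal (RtoC ((1+c)/2)) y) (vscal (RtoC (1 - (1+c)/2)) (vopp y))).
  - apply abs_hull_cv; auto; try lra. apply abs_hull_opp; auto.
  - rewrite vscal_opp_v, <- rs_opp, <- rs_add. f_equal. unfold RtoC; f_equal; field.
Qed.

Lemma abs_hull_comb a b y1 y2 :
  0 <= a -> 0 <= b -> a + b <= 1 -> abs_hull F x y1 -> abs_hull F x y2 ->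
  abs_hull F x (vadd (vscal (RtoC a) y1) (vscal (RtoC b) y2)).
Proof.
  intros Ha Hb Hab H1 H2.
  destruct (Req_dec (a + b) 0) as [Hz|Hnz].
  - replace a with 0 by lra. replace b with 0 by lra.
    rewrite !vscal_0, vadd_0. apply abs_hull_zero.
  - replace (vadd (vscal (RtoC a) y1) (vscal (RtoC b) y2)) with
      (vscal (RtoC (a+b)) (vadd (vscal (RtoC (a / (a+b))) y1) (vscal (RtoC (1 - a / (a+b))) y2))).
    + apply abs_hull_rscal; [rewrite Rabs_right; lra|].
      apply abs_hull_cv; auto. split.
      * apply Rmult_le_pos; [lra| left; apply Rinv_0_lt_compat; lra].
      * apply Rmult_le_reg_r with (a + b); [lra|]. field_simplify; lra.
    + rewrite vscal_distr_v, !rs_mul. f_equal; f_equal; unfold RtoC; f_equal; field; lra.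
Qed.

Lemma scaled_hull_zero : scaled_hull F x vzero 0.
Proof. exists vzero. split; [apply abs_hull_zero| rewrite vscal_0; auto]. Qed.

Lemma scaled_hull_op y : abs_hull F x y -> scaled_hull F x y 1.
Proof. intros H; exists y; split; auto. rewrite rs_1; auto. Qed.

Lemma scaled_hull_mono y W W' : scaled_hull F x y W -> 0 <= W <= W' -> scaled_hull F x y W'.
Proof.
  intros [z [Hz ->]] HW. destruct (Req_dec W' 0) as [Hz'|Hnz].
  - replace W with W' by lra. exists z; split; auto.
  - exists (vscal (RtoC (W / W')) z). split.
    + apply abs_hull_rscal; auto. rewrite Rabs_right.
      * apply Rmult_le_reg_r with W'; [lra|]. field_simplify; lra.
      * apply Rle_ge, Rmult_le_pos; [lra| left; apply Rinv_0_lt_compat; lra].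
    + rewrite rs_mul. f_equal; unfold RtoC; f_equal; field; lra.
Qed.

Lemma scaled_hull_add y1 y2 W1 W2 :
  0 <= W1 -> 0 <= W2 -> scaled_hull F x y1 W1 -> scaled_hull F x y2 W2 ->
  scaled_hull F x (vadd y1 y2) (W1 + W2).
Proof.
  intros H1 H2 [z1 [Hz1 ->]] [z2 [Hz2 ->]].
  destruct (Req_dec (W1 + W2) 0) as [Hz|Hnz].
  - replace W1 with 0 by lra. replace W2 with 0 by lra.
    rewrite !vscal_0, vadd_0, Rplus_0_r. apply scaled_hull_zero.
  - exists (vadd (vscal (RtoC (W1/(W1+W2))) z1) (vscal (RtoC (W2/(W1+W2))) z2)). split.
    + apply abs_hull_comb; auto; try (apply Rmult_le_pos; [lra| left; apply Rinv_0_lt_compat; lra]).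
      right; field; lra.
    + rewrite vscal_distr_v, !rs_mul. f_equal; f_equal; unfold RtoC; f_equal; field; lra.
Qed.

Lemma scaled_hull_rscal y W c : scaled_hull F x y W -> scaled_hull F x (vscal (RtoC c) y) (Rabs c * W).
Proof.
  intros [z [Hz ->]].
  destruct (Req_dec c 0) as [->|Hc].
  - rewrite vscal_0, Rabs_R0, Rmult_0_l. apply scaled_hull_zero.
  - assert (Hac : Rabs c <> 0) by (apply Rabs_no_R0; auto).
    exists (vscal (RtoC (c / Rabs c)) z). split.
    + apply abs_hull_rscal; auto. unfold Rdiv.
      rewrite Rabs_mult, Rabs_inv, Rabs_Rabsolu. right; field; auto.
    + rewrite !rs_mul. f_equal; unfold RtoC; f_equal. field; auto.
Qed.

End ScaledHull.

(** * Multipliers with symbols of bounded variation *)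

Definition variation (r : nat -> R) (n : nat) : R := sumR (fun k => Rabs (r (S k) - r k)) n.

Lemma variation_nonneg r n : 0 <= variation r n.
Proof. apply sumR_nonneg; intros; apply Rabs_pos. Qed.

Definition bounded_variation (m : nat -> Defs.C) (M V : R) : Prop :=
  (forall k, Cmod (m k) <= M) /\ (forall n, sumR (fun k => Cmod (Cminus (m (S k)) (m k))) n <= V).

Lemma bounded_variation_nonneg m M V : bounded_variation m M V -> 0 <= M + V.
Proof.
  intros [HM HV]. specialize (HM O); specialize (HV O); simpl in HV.
  pose proof (Cmod_nonneg (m O)). lra.
Qed.

Section AbelSummation.

Context {X : CBanach} (p : nat -> X -> X) (x : X).

Lemma abs_hull_proj_sum n : abs_hull (partial_projs p) x (proj_sum p (S n) x).
Proof.
  apply (abs_hull_op (partial_projs p) x (proj_sum p (S n))).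
  exists (S n); split; [lia| reflexivity].
Qed.

Lemma abs_hull_proj_nonempty : exists y, abs_hull (partial_projs p) x y.
Proof. exists (proj_sum p 1 x); apply abs_hull_proj_sum. Qed.

Let Hne := abs_hull_proj_nonempty.

(** Abel summation:
    [sum_(k<=n) r_k p_k x = r_n P_(n+1) x + sum_(k<n) (r_k - r_(k+1)) P_(k+1) x],
    and the second sum lies in [variation r n] times the hull. *)
Lemma abel_summation (r : nat -> R) : forall n, exists G,
  mult_sum p (fun k => RtoC (r k)) x (S n) = vadd (vscal (RtoC (r n)) (proj_sum p (S n) x)) G /\
  scaled_hull (partial_projs p) x G (variation r n).
Proof.
  induction n.
  - exists vzero. split; [|apply (scaled_hull_zero Hne)].
    unfold mult_sum, proj_sum; simpl. rewrite !vadd_0l, vadd_0; auto.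
  - destruct IHn as [G [HE HG]].
    exists (vadd (vscal (RtoC (r n - r (S n))) (proj_sum p (S n) x)) G). split.
    + change (mult_sum p (fun k => RtoC (r k)) x (S (S n))) with
        (vadd (mult_sum p (fun k => RtoC (r k)) x (S n)) (vscal (RtoC (r (S n))) (p (S n) x))).
      change (proj_sum p (S (S n)) x) with (vadd (proj_sum p (S n) x) (p (S n) x)).
      rewrite HE, vscal_distr_v, vadd_4, <- rs_add.
      replace (r (S n) + (r n - r (S n))) with (r n) by ring.
      rewrite <- vadd_assoc, (vadd_comm _ G); auto.
    + replace (variation r (S n)) with (Rabs (r n - r (S n)) * 1 + variation r n)
        by (unfold variation; simpl; rewrite Rabs_minus_sym; ring).
      apply (scaled_hull_add Hne); auto.
      * pose proof (Rabs_pos (r n - r (S n))); lra.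
      * apply variation_nonneg.
      * apply (scaled_hull_rscal Hne), scaled_hull_op, abs_hull_proj_sum.
Qed.

Lemma real_mult_sum_in_hull (r : nat -> R) M V :
  (forall k, Rabs (r k) <= M) -> (forall n, variation r n <= V) ->
  forall N, scaled_hull (partial_projs p) x (mult_sum p (fun k => RtoC (r k)) x N) (M + V).
Proof.
  intros HM HV N.
  assert (HM0 : 0 <= M) by (specialize (HM O); pose proof (Rabs_pos (r O)); lra).
  assert (HV0 : 0 <= V) by (specialize (HV O); unfold variation in HV; simpl in HV; lra).
  destruct N as [|n].
  - eapply scaled_hull_mono; [apply (scaled_hull_zero Hne)| lra].
  - destruct (abel_summation r n) as [G [-> HG]].
    pose proof (Rabs_pos (r n)). pose proof (variation_nonneg r n).
    eapply scaled_hull_mono.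
    + apply (scaled_hull_add Hne); [| | apply (scaled_hull_rscal Hne), scaled_hull_op, abs_hull_proj_sum| apply HG]; lra.
    + specialize (HM n); specialize (HV n); lra.
Qed.

End AbelSummation.

Definition Ci : Defs.C := (0, 1).

Lemma Cmod_Ci : Cmod Ci = 1.
Proof.
  unfold Cmod, Ci; simpl. replace (0*(0*1) + 1*(1*1)) with 1 by ring. apply sqrt_1.
Qed.

Lemma fst_le_Cmod (a : Defs.C) : Rabs (fst a) <= Cmod a.
Proof.
  pose proof (Complex.Rmax_Cmod a). pose proof (Rmax_l (Rabs (fst a)) (Rabs (snd a))).
  unfold Complex.Cmod in *. unfold Cmod. lra.
Qed.

Lemma snd_le_Cmod (a : Defs.C) : Rabs (snd a) <= Cmod a.
Proof.
  pose proof (Complex.Rmax_Cmod a). pose proof (Rmax_r (Rabs (fst a)) (Rabs (snd a))).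
  unfold Complex.Cmod in *. unfold Cmod. lra.
Qed.

Lemma mult_sum_re_im {X : CBanach} (p : nat -> X -> X) m x N :
  mult_sum p m x N = vadd (mult_sum p (fun k => RtoC (fst (m k))) x N)
                          (vscal Ci (mult_sum p (fun k => RtoC (snd (m k))) x N)).
Proof.
  unfold mult_sum. rewrite <- psum_scal, <- psum_add. apply psum_ext; intros.
  rewrite vscal_assoc, <- vscal_distr_s. apply vscal_eqC. destruct (m k); cring.
Qed.

Definition re_im_hull {X : CBanach} (p : nat -> X -> X) (W : R) (x u : X) : Prop :=
  exists y1 y2, scaled_hull (partial_projs p) x y1 W /\ scaled_hull (partial_projs p) x y2 W /\
    u = vadd y1 (vscal Ci y2).

Lemma mult_sum_re_im_hull {X : CBanach} (p : nat -> X -> X) m M V x N :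
  bounded_variation m M V -> re_im_hull p (M + V) x (mult_sum p m x N).
Proof.
  intros [HM HV]. rewrite mult_sum_re_im.
  do 2 eexists; split; [| split; [| reflexivity]]; apply real_mult_sum_in_hull.
  - intros k. eapply Rle_trans; [apply fst_le_Cmod| apply HM].
  - intros n. eapply Rle_trans; [| apply (HV n)]. apply sumR_le; intros k.
    apply (fst_le_Cmod (Cminus (m (S k)) (m k))).
  - intros k. eapply Rle_trans; [apply snd_le_Cmod| apply HM].
  - intros n. eapply Rle_trans; [| apply (HV n)]. apply sumR_le; intros k.
    apply (snd_le_Cmod (Cminus (m (S k)) (m k))).
Qed.

Lemma re_im_hull_witnesses {X : CBanach} (p : nat -> X -> X) W (l : list (X * X)) :
  (forall q, In q l -> re_im_hull p W (fst q) (snd q)) ->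
  exists L : list (X * (X * X)), map fst L = map fst l /\
    map (fun q => vadd (vscal (RtoC W) (fst (snd q))) (vscal Ci (vscal (RtoC W) (snd (snd q))))) L
      = map snd l /\
    forall q, In q L -> abs_hull (partial_projs p) (fst q) (fst (snd q)) /\
                        abs_hull (partial_projs p) (fst q) (snd (snd q)).
Proof.
  induction l as [|[x u] l IH]; intros Hl.
  - exists nil; simpl; split; [reflexivity| split; [reflexivity| intros _ []]].
  - destruct (IH (fun q Hq => Hl q (or_intror Hq))) as [L [H1 [H2 H3]]].
    pose proof (Hl (x,u) (or_introl eq_refl)) as Hxu; simpl in Hxu.
    destruct Hxu as [y1 [y2 [[z1 [Hz1 ->]] [[z2 [Hz2 ->]] ->]]]].
    exists ((x, (z1, z2)) :: L). simpl. rewrite H1, H2.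
    split; [reflexivity| split; [reflexivity|]].
    intros q [<-|Hq]; simpl; auto.
Qed.

Lemma re_im_hull_R_bound {X : CBanach} (p : nat -> X -> X) K W :
  R_bound_by (partial_projs p) K -> 0 <= W ->
  forall l : list (X * X), (forall q, In q l -> re_im_hull p W (fst q) (snd q)) ->
  rad_norm (map snd l) <= 2 * W * K * rad_norm (map fst l).
Proof.
  intros HK HW l Hl.
  destruct (re_im_hull_witnesses p W l Hl) as [L [H1 [H2 H3]]]. rewrite <- H2, <- H1.
  assert (Hz : forall g : X * (X * X) -> X, (forall q, In q L -> abs_hull (partial_projs p) (fst q) (g q)) ->
    rad_norm (map g L) <= K * rad_norm (map fst L)).
  { intros g Hg. pose proof (abs_hull_R_bound _ K HK (map (fun q => (fst q, g q)) L)) as H.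
    rewrite !map_map in H. apply H. intros q Hq. apply in_map_iff in Hq.
    destruct Hq as [q' [<- Hq']]. apply Hg; auto. }
  pose proof (Hz _ (fun q Hq => proj1 (H3 q Hq))) as Hz1.
  pose proof (Hz _ (fun q Hq => proj2 (H3 q Hq))) as Hz2.
  pose proof (rad_scal (fun q => fst (snd q)) (RtoC W) L).
  pose proof (rad_scal (fun q => vscal (RtoC W) (snd (snd q))) Ci L).
  pose proof (rad_scal (fun q => snd (snd q)) (RtoC W) L).
  pose proof (rad_add (fun q => vscal (RtoC W) (fst (snd q)))
                      (fun q => vscal Ci (vscal (RtoC W) (snd (snd q)))) L).
  rewrite Cmod_Ci, Cmod_RtoC, Rabs_right in * by lra.
  assert (W * rad_norm (map (fun q => fst (snd q)) L) <= W * (K * rad_norm (map fst L)))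
    by (apply Rmult_le_compat_l; auto).
  assert (W * rad_norm (map (fun q => snd (snd q)) L) <= W * (K * rad_norm (map fst L)))
    by (apply Rmult_le_compat_l; auto).
  lra.
Qed.

Section Multipliers.

Context {X : CBanach} (p : nat -> X -> X) (K : R) (m : nat -> Defs.C) (M V : R).
Hypothesis HK : R_bound_by (partial_projs p) K.
Hypothesis Hbv : bounded_variation m M V.

Lemma mult_sum_norm : forall x N, vnorm (mult_sum p m x N) <= 2 * (M + V) * K * vnorm x.
Proof.
  intros x N. pose proof (re_im_hull_R_bound p K (M + V) HK (bounded_variation_nonneg _ _ _ Hbv)
    [(x, mult_sum p m x N)]) as G.
  simpl in G. rewrite !rad_single in G. apply G.
  intros q [<-|[]]. apply mult_sum_re_im_hull; auto.
Qed.

(** The multiplier series converges: its partial sums are Cauchy, because the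
    tail from [b] is the multiplier sum of [x - P_b x]. *)
Lemma mult_sum_converges {Xs : nat -> X -> Prop} :
  Schauder Xs p -> forall x, exists l, conv (mult_sum p m x) l.
Proof.
  intros Hs x. set (Cc := Rabs (2 * (M + V) * K) + 1).
  assert (HC : 0 < Cc) by (unfold Cc; pose proof (Rabs_pos (2 * (M + V) * K)); lra).
  assert (Hb : forall y N, vnorm (mult_sum p m y N) <= Cc * vnorm y).
  { intros y N. eapply Rle_trans; [apply mult_sum_norm|].
    apply Rmult_le_compat_r; [apply vnorm_nonneg|].
    unfold Cc. pose proof (Rle_abs (2 * (M + V) * K)). lra. }
  apply vcomplete. intros eps Heps.
  destruct (sch_conv Hs x (eps / Cc)) as [N HN]; [apply Rdiv_lt_0_compat; auto|].
  assert (key : forall a b, (N <= b)%nat -> (b <= a)%nat ->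
    vnorm (vsub (mult_sum p m x a) (mult_sum p m x b)) < eps).
  { intros a b Hb1 Hb2. rewrite (mult_sum_tail Hs) by auto.
    eapply Rle_lt_trans; [apply Hb|].
    specialize (HN b Hb1). rewrite vnorm_sub_sym in HN. unfold proj_sum.
    apply Rlt_le_trans with (Cc * (eps / Cc)); [apply Rmult_lt_compat_l; auto| right; field; lra]. }
  exists N. intros a b Ha Hb'. change (vnorm (vsub (mult_sum p m x a) (mult_sum p m x b)) < eps).
  destruct (Nat.le_gt_cases b a); [apply key; auto|].
  rewrite vnorm_sub_sym. apply key; lia.
Qed.

End Multipliers.

Definition mult_op {X : CBanach} (p : nat -> X -> X) (m : nat -> Defs.C) (x : X) : X :=
  epsilon (inhabits vzero) (fun l => conv (mult_sum p m x) l).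

Lemma mult_op_conv {X : CBanach} Xs (p : nat -> X -> X) K m M V :
  Schauder Xs p -> R_bound_by (partial_projs p) K -> bounded_variation m M V ->
  forall x, conv (mult_sum p m x) (mult_op p m x).
Proof. intros Hs HK Hbv x. unfold mult_op. apply epsilon_spec. eapply mult_sum_converges; eauto. Qed.

Lemma le_epsilon a b : (forall eps, 0 < eps -> a <= b + eps) -> a <= b.
Proof. intros H. apply Rnot_lt_le; intros Hlt. specialize (H ((a - b)/2)). lra. Qed.

Lemma approx_by_mult_sums {X : CBanach} (p : nat -> X -> X) M V (F : (X -> X) -> Prop) :
  (forall S, F S -> exists m, bounded_variation m M V /\ forall x, conv (mult_sum p m x) (S x)) ->
  forall ts, (forall q, In q ts -> F (fst q)) -> forall eps, 0 < eps ->
  exists L : list (((X -> X) * X) * X), map fst L = ts /\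
    (forall q, In q L -> re_im_hull p (M + V) (snd (fst q)) (snd q)) /\
    sumL (fun q => vnorm (vsub (fst (fst q) (snd (fst q))) (snd q))) L < eps.
Proof.
  intros HF. induction ts as [|[S x] ts IH]; intros Hts eps Heps.
  - exists nil. simpl. split; [reflexivity| split; [intros _ []| unfold sumL; simpl; lra]].
  - destruct (IH (fun q Hq => Hts q (or_intror Hq)) (eps/2)) as [L [H1 [H2 H3]]]; [lra|].
    destruct (HF S (Hts (S,x) (or_introl eq_refl))) as [m [Hbv Hc]].
    destruct (Hc x (eps/2)) as [N HN]; [lra|].
    exists (((S,x), mult_sum p m x N) :: L). simpl. rewrite H1. repeat split; auto.
    + intros q [<-|Hq]; simpl; auto. apply mult_sum_re_im_hull; auto.
    + unfold sumL in *; simpl. specialize (HN N (le_n _)). rewrite vnorm_sub_sym in HN. lra.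
Qed.

(** Each [S x] is approximated by a partial sum, and [rad_lip]
    passes the bound to the limit. *)
Lemma multiplier_family_R_bounded {X : CBanach} (p : nat -> X -> X) K M V (F : (X -> X) -> Prop) :
  R_bound_by (partial_projs p) K ->
  (forall S, F S -> exists m, bounded_variation m M V /\ forall x, conv (mult_sum p m x) (S x)) ->
  R_bounded F.
Proof.
  intros HK HF. exists (2 * (M + V) * K). intros ts Hts.
  destruct ts as [|t0 ts0].
  { unfold rad_norm; simpl. rewrite vnorm_zero. lra. }
  assert (H0 : 0 <= M + V).
  { destruct (HF (fst t0)) as [m [Hbv _]]; [apply Hts; left; auto|].
    eapply bounded_variation_nonneg; eauto. }
  apply le_epsilon. intros eps Heps.
  destruct (approx_by_mult_sums p M V F HF _ Hts eps Heps) as [L [H1 [H2 H3]]].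
  rewrite <- H1, !map_map.
  eapply Rle_trans; [apply (rad_lip (fun q => fst (fst q) (snd (fst q))) snd L)|].
  pose proof (re_im_hull_R_bound p K (M + V) HK H0 (map (fun q => (snd (fst q), snd q)) L)) as H.
  rewrite !map_map in H. simpl in H.
  assert (rad_norm (map snd L) <= 2 * (M + V) * K * rad_norm (map (fun q => snd (fst q)) L)).
  { apply H. intros q Hq. apply in_map_iff in Hq. destruct Hq as [q' [<- Hq']]. apply H2; auto. }
  lra.
Qed.

(** * Part (b): Ritt multipliers *)

Lemma Cmod_Cminus_R a b : Cmod (Cminus (RtoC a) (RtoC b)) = Rabs (a - b).
Proof. rewrite <- Cmod_RtoC. f_equal. unfold Cminus, RtoC; simpl; f_equal; ring. Qed.

Lemma mono_le (c : nat -> R) : (forall n, c n <= c (S n)) -> forall k j, (k <= j)%nat -> c k <= c j.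
Proof. intros H k j Hkj. induction Hkj; [lra| specialize (H m); lra]. Qed.

Lemma exists_least (P : nat -> Prop) :
  (exists k, P k) -> exists k, P k /\ forall j, (j < k)%nat -> ~ P j.
Proof.
  intros [k Hk]. revert Hk. induction k as [k IH] using (well_founded_induction Wf_nat.lt_wf).
  intros Hk. destruct (classic (exists j, (j < k)%nat /\ P j)) as [[j [Hj HPj]]|Hn].
  - apply (IH j Hj HPj).
  - exists k; split; auto. intros j Hj HPj; apply Hn; eauto.
Qed.

Lemma variation_monotone (u : nat -> R) B :
  (forall k, 0 <= u k <= B) -> (forall k, u k <= u (S k)) -> forall N, variation u N <= B.
Proof.
  intros Hb Hup N. unfold variation.
  rewrite (sumR_ext _ (fun k => u (S k) - u k)), sumR_telescope.
  - pose proof (Hb N); pose proof (Hb O); lra.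
  - intros k _. rewrite Rabs_right; auto. specialize (Hup k); lra.
Qed.

Lemma variation_unimodal (u : nat -> R) B k0 :
  (forall k, 0 <= u k <= B) -> (forall k, (k < k0)%nat -> u k <= u (S k)) ->
  (forall k, (k0 < k)%nat -> u (S k) <= u k) -> forall N, variation u N <= 3 * B.
Proof.
  intros Hb Hup Hdn N. unfold variation.
  assert (Hrise : forall N, (N <= k0)%nat -> sumR (fun k => Rabs (u (S k) - u k)) N = u N - u O).
  { induction N0; intros HN; simpl; [ring|]. rewrite IHN0 by lia. rewrite Rabs_right; [ring|].
    specialize (Hup N0 ltac:(lia)); lra. }
  assert (Hfall : forall N, (S k0 <= N)%nat -> sumR (fun k => Rabs (u (S k) - u k)) N =
     u k0 - u O + Rabs (u (S k0) - u k0) + u (S k0) - u N).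
  { intros N0 HN. induction HN; simpl; [rewrite Hrise by lia; ring|].
    rewrite IHHN, (Rabs_left1 (u (S m) - u m)); [ring|]. specialize (Hdn m ltac:(lia)); lra. }
  destruct (Nat.le_gt_cases N k0).
  - rewrite Hrise by auto. pose proof (Hb N); pose proof (Hb O); lra.
  - rewrite Hfall by lia. pose proof (Hb k0); pose proof (Hb O); pose proof (Hb (S k0)); pose proof (Hb N).
    assert (Rabs (u (S k0) - u k0) <= B) by (apply Rabs_le; lra). lra.
Qed.

(** The symbol of [n (T^n - T^(n+1))] at a point [t] of the spectrum. *)
Definition ritt_symbol (n : nat) (t : R) : R := INR n * (t ^ n - t ^ S n).

Lemma pow_diff_lower j s t : 0 <= s <= t -> INR (S j) * s ^ j * (t - s) <= t ^ S j - s ^ S j.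
Proof.
  intros Hst. induction j; [simpl; lra|].
  rewrite S_INR.
  replace (t ^ S (S j) - s ^ S (S j)) with (t * (t ^ S j - s ^ S j) + s ^ S j * (t - s)) by (simpl; ring).
  pose proof (pow_le s j ltac:(lra)). pose proof (pos_INR (S j)).
  assert (INR (S j) * s ^ j * (t - s) * s <= (t ^ S j - s ^ S j) * t).
  { apply Rmult_le_compat; try nra. apply Rmult_le_pos; nra. }
  simpl. simpl in H1. nra.
Qed.

Lemma pow_diff_upper j s t : 0 <= s <= t -> t ^ S j - s ^ S j <= INR (S j) * t ^ j * (t - s).
Proof.
  intros Hst. induction j; [simpl; lra|].
  rewrite S_INR.
  replace (t ^ S (S j) - s ^ S (S j)) with (t * (t ^ S j - s ^ S j) + s ^ S j * (t - s)) by (simpl; ring).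
  pose proof (pow_le s (S j) ltac:(lra)). pose proof (pow_incr s t (S j) Hst).
  assert (t * (t ^ S j - s ^ S j) <= t * (INR (S j) * t ^ j * (t - s))) by (apply Rmult_le_compat_l; lra).
  assert (s ^ S j * (t - s) <= t ^ S j * (t - s)) by (apply Rmult_le_compat_r; lra).
  simpl in *. nra.
Qed.

Lemma ritt_symbol_bound n t : 0 <= t <= 1 -> 0 <= ritt_symbol n t <= 1.
Proof.
  intros Ht. unfold ritt_symbol.
  assert (Hkey : t ^ n * (1 + INR n * (1 - t)) <= 1).
  { induction n; [simpl; lra|].
    rewrite S_INR. pose proof (pow_le t n ltac:(lra)).
    replace (t ^ S n * (1 + (INR n + 1) * (1 - t)))
      with (t * (t ^ n * (1 + INR n * (1 - t))) + t ^ S n * (1 - t)) by (simpl; ring).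
    assert (t * (t ^ n * (1 + INR n * (1 - t))) <= t * 1) by (apply Rmult_le_compat_l; lra).
    assert (t ^ S n * (1 - t) <= 1 * (1 - t)).
    { apply Rmult_le_compat_r; [lra|]. rewrite <- (pow1 (S n)). apply pow_incr; lra. }
    lra. }
  pose proof (pow_le t n ltac:(lra)). pose proof (pos_INR n).
  replace (t ^ n - t ^ S n) with (t ^ n * (1 - t)) by (simpl; ring).
  split; [apply Rmult_le_pos; auto; apply Rmult_le_pos; lra| nra].
Qed.

Lemma ritt_symbol_up j s t : 0 <= s <= t -> t <= INR (S j) / (INR (S j) + 1) ->
  ritt_symbol (S j) s <= ritt_symbol (S j) t.
Proof.
  intros Hst Ht. unfold ritt_symbol. apply Rmult_le_compat_l; [apply pos_INR|].
  pose proof (pow_diff_lower j s t Hst). pose proof (pos_INR (S j)).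
  assert (Hn : INR (S j) * (1 - t) >= t).
  { apply Rmult_le_compat_r with (r := INR (S j) + 1) in Ht; [|lra].
    unfold Rdiv in Ht. rewrite Rmult_assoc, Rinv_l in Ht by lra. nra. }
  pose proof (pow_le s j ltac:(lra)).
  assert (t <= 1).
  { enough (INR (S j) / (INR (S j) + 1) <= 1) by lra.
    apply Rmult_le_reg_r with (INR (S j) + 1); [lra|]. field_simplify; lra. }
  replace (t ^ S j - t ^ S (S j)) with (t ^ S j * (1 - t)) by (simpl; ring).
  replace (s ^ S j - s ^ S (S j)) with (s ^ S j * (1 - s)) by (simpl; ring).
  assert (A1 : (s ^ S j + INR (S j) * s ^ j * (t - s)) * (1 - t) <= t ^ S j * (1 - t))
    by (apply Rmult_le_compat_r; lra).
  assert (A2 : s ^ j * (t - s) * s <= s ^ j * (t - s) * (INR (S j) * (1 - t))).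
  { apply Rmult_le_compat_l; [apply Rmult_le_pos|]; lra. }
  replace (s ^ S j) with (s * s ^ j) in * by (simpl; ring). nra.
Qed.

Lemma ritt_symbol_down j s t : INR (S j) / (INR (S j) + 1) <= s -> s <= t <= 1 ->
  ritt_symbol (S j) t <= ritt_symbol (S j) s.
Proof.
  intros Hs Hst. unfold ritt_symbol. apply Rmult_le_compat_l; [apply pos_INR|].
  pose proof (pos_INR (S j)).
  assert (Hs0 : 0 <= s).
  { enough (0 <= INR (S j) / (INR (S j) + 1)) by lra.
    apply Rmult_le_pos; [lra| left; apply Rinv_0_lt_compat; lra]. }
  pose proof (pow_diff_upper j s t ltac:(lra)).
  assert (Hn : INR (S j) * (1 - s) <= s).
  { apply Rmult_le_compat_r with (r := INR (S j) + 1) in Hs; [|lra].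
    unfold Rdiv in Hs. rewrite Rmult_assoc, Rinv_l in Hs by lra. nra. }
  pose proof (pow_le t j ltac:(lra)).
  replace (t ^ S j - t ^ S (S j)) with (t ^ S j * (1 - t)) by (simpl; ring).
  replace (s ^ S j - s ^ S (S j)) with (s ^ S j * (1 - s)) by (simpl; ring).
  assert (A1 : (t ^ S j - INR (S j) * t ^ j * (t - s)) * (1 - s) <= s ^ S j * (1 - s))
    by (apply Rmult_le_compat_r; lra).
  assert (A2 : t ^ j * (t - s) * (INR (S j) * (1 - s)) <= t ^ j * (t - s) * t).
  { apply Rmult_le_compat_l; [apply Rmult_le_pos|]; lra. }
  replace (t ^ S j) with (t * t ^ j) in * by (simpl; ring). nra.
Qed.

Section RittSymbols.

Variable c : nat -> R.
Hypothesis Hc : forall n, 0 < c n < 1.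
Hypothesis Hmono : forall n, c n <= c (S n).

Lemma powers_symbol_bv n : bounded_variation (fun k => RtoC (c k ^ n)) 1 1.
Proof.
  assert (Hpow : forall k, 0 <= c k ^ n <= 1).
  { intros k. pose proof (Hc k). split; [apply pow_le; lra|].
    rewrite <- (pow1 n). apply pow_incr; lra. }
  split.
  - intros k. rewrite Cmod_RtoC, Rabs_right; [apply Hpow| apply Rle_ge, Hpow].
  - intros N. rewrite (sumR_ext _ (fun k => Rabs (c (S k) ^ n - c k ^ n)))
      by (intros; apply Cmod_Cminus_R).
    apply (variation_monotone (fun k => c k ^ n)); auto.
    intros k. apply pow_incr. pose proof (Hc k); pose proof (Hmono k); lra.
Qed.

(** The symbols [n (c_k^n - c_k^(n+1))] are bounded by 1 and unimodal in [k]
    (increasing while [c_k <= n/(n+1)]), hence of variation [<= 3]. *)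
Lemma ritt_symbol_bv n : (1 <= n)%nat -> bounded_variation (fun k => RtoC (ritt_symbol n (c k))) 1 3.
Proof.
  intros Hn. assert (Hb : forall k, 0 <= ritt_symbol n (c k) <= 1)
    by (intros k; apply ritt_symbol_bound; pose proof (Hc k); lra).
  split.
  - intros k. rewrite Cmod_RtoC, Rabs_right; [apply Hb| apply Rle_ge, Hb].
  - intros N. destruct n as [|j]; [lia|].
    rewrite (sumR_ext _ (fun k => Rabs (ritt_symbol (S j) (c (S k)) - ritt_symbol (S j) (c k))))
      by (intros; apply Cmod_Cminus_R).
    change (variation (fun k => ritt_symbol (S j) (c k)) N <= 3).
    set (t0 := INR (S j) / (INR (S j) + 1)).
    destruct (classic (exists k, c (S k) > t0)) as [Hex|Hnex].
    + destruct (exists_least _ Hex) as [k1 [Hk1 Hmin]].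
      rewrite <- (Rmult_1_r 3). apply (variation_unimodal _ 1 k1 Hb).
      * intros k Hk. apply ritt_symbol_up; [pose proof (Hc k); split; [lra| apply Hmono]|].
        apply Rnot_gt_le, Hmin; auto.
      * intros k Hk. apply ritt_symbol_down.
        -- pose proof (mono_le c Hmono (S k1) k Hk). unfold t0 in *. lra.
        -- split; [apply Hmono| pose proof (Hc (S k)); lra].
    + enough (variation (fun k => ritt_symbol (S j) (c k)) N <= 1) by lra.
      apply (variation_monotone _ 1 Hb). intros k.
      apply ritt_symbol_up; [pose proof (Hc k); split; [lra| apply Hmono]|].
      apply Rnot_gt_le. intros Hg. apply Hnex. eauto.
Qed.

End RittSymbols.

(** [T^n] is the multiplier with symbol [c_k^n]: [T] acts on [X_k] by [c_k]
    and is continuous, so it can be applied termwise to the expansion. *)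
Lemma ritt_powers_conv {X : CBanach} Xs (p : nat -> X -> X) (c : nat -> R) (T : X -> X) :
  Schauder Xs p -> bounded_op T ->
  (forall x, conv (psum (fun n => vscal (RtoC (c n)) (p n x))) (T x)) ->
  forall n x, conv (mult_sum p (fun k => RtoC (c k ^ n)) x) (Nat.iter n T x).
Proof.
  intros Hs [[Hadd Hsc] [MT HMT]] Hconv.
  assert (Tpk : forall k x, T (p k x) = vscal (RtoC (c k)) (p k x)).
  { intros k x. apply (conv_unique _ _ _ (Hconv (p k x))).
    apply conv_eventually with (S k). intros N HN. apply psum_single with k; auto.
    intros j. rewrite (p_proj Hs). destruct (Nat.eqb_spec j k); [subst; auto| apply vscal_zero_v]. }
  induction n; intros x; simpl.
  - eapply conv_ext; [| apply (sch_conv Hs x)]. intros N. unfold mult_sum.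
    apply psum_ext; intros; symmetry; apply rs_1.
  - eapply conv_ext; [| apply (conv_op T MT _ _ Hadd HMT (IHn x))].
    intros N. unfold mult_sum. rewrite psum_map by exact Hadd. apply psum_ext; intros k _.
    rewrite Hsc, Tpk, rs_mul. f_equal. f_equal. ring.
Qed.

Lemma ritt_multiplier_R_Ritt {X : CBanach} (Xs : nat -> X -> Prop) (p : nat -> X -> X) :
  R_Schauder Xs p -> forall T : X -> X, Ritt T -> Ritt_multiplier Xs p T -> R_Ritt T.
Proof.
  intros [Hs [K HK]] T [HbT _] [c [Hc [Hmono Hconv]]].
  pose proof (ritt_powers_conv Xs p c T Hs HbT Hconv) as Hpow.
  split; [exact HbT| split].
  - apply (multiplier_family_R_bounded p K 1 1 _ HK). intros S [n Hn].
    exists (fun k => RtoC (c k ^ n)). split; [apply powers_symbol_bv; auto|].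
    intros x. rewrite Hn. apply Hpow.
  - apply (multiplier_family_R_bounded p K 1 3 _ HK). intros U [n [Hn1 Hn]].
    exists (fun k => RtoC (ritt_symbol n (c k))). split; [apply ritt_symbol_bv; auto|].
    intros x. rewrite Hn.
    eapply conv_ext; [| apply conv_scal, conv_sub; apply Hpow].
    intros N. unfold mult_sum. rewrite <- psum_sub, <- psum_scal. apply psum_ext; intros k _.
    rewrite rs_sub, rs_mul. reflexivity.
Qed.

(** * Geometry of sectors *)

Lemma atan_lt_angle th x y : 0 < th < PI -> 0 < x ->
  y * y < sin th * sin th * (x * x + y * y) -> Rabs (atan (y / x)) < th.
Proof.
  intros Hth Hx Hy. pose proof (atan_bound (y / x)).
  destruct (Rlt_or_le th (PI / 2)) as [Hlt|Hge]; [|apply Rabs_def1; lra].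
  assert (Hc : 0 < cos th) by (apply cos_gt_0; lra).
  assert (Hs : 0 < sin th) by (apply sin_gt_0; lra).
  pose proof (sin2_cos2 th) as H1. unfold Rsqr in H1.
  assert (Hyc : y * cos th * (y * cos th) < sin th * x * (sin th * x)).
  { replace (y * cos th * (y * cos th)) with (y * y * (cos th * cos th)) by ring.
    replace (cos th * cos th) with (1 - sin th * sin th) by lra. nra. }
  assert (Hsx : 0 < sin th * x) by nra.
  assert (A1 : y * cos th < sin th * x) by nra.
  assert (A2 : - (sin th * x) < y * cos th) by nra.
  assert (B1 : y / x < tan th).
  { unfold tan. apply (Rmult_lt_reg_r (x * cos th)); [nra|].
    replace (y / x * (x * cos th)) with (y * cos th) by (field; lra).
    replace (sin th / cos th * (x * cos th)) with (sin th * x) by (field; lra). auto. }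
  assert (B2 : - tan th < y / x).
  { unfold tan. apply (Rmult_lt_reg_r (x * cos th)); [nra|].
    replace (y / x * (x * cos th)) with (y * cos th) by (field; lra).
    replace (- (sin th / cos th) * (x * cos th)) with (- (sin th * x)) by (field; lra). auto. }
  apply atan_increasing in B1. apply atan_increasing in B2.
  rewrite atan_opp, atan_tan in * by lra. apply Rabs_def1; lra.
Qed.

Lemma sector_of th x y : 0 < th < PI -> 0 < x ->
  y * y < sin th * sin th * (x * x + y * y) -> sector th (x, y).
Proof.
  intros Hth Hx Hy. set (u := y / x). set (q := sqrt (1 + u²)).
  assert (Hq : 0 < q) by (apply sqrt_lt_R0; unfold Rsqr; nra).
  assert (Hqq : q * q = 1 + u * u) by (unfold q; rewrite sqrt_sqrt; unfold Rsqr; nra).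
  set (r := sqrt (x * x + y * y)).
  assert (Hr : 0 < r) by (apply sqrt_lt_R0; nra).
  assert (Hrr : r * r = x * x + y * y) by (unfold r; rewrite sqrt_sqrt; nra).
  assert (Hrq : r = x * q).
  { apply Rsqr_inj; [lra| nra|]. unfold Rsqr. rewrite Hrr. replace (x * q * (x * q)) with (x * x * (q * q)) by ring.
    rewrite Hqq. unfold u. field. lra. }
  exists r, (atan u). split; [auto|]. split.
  { pose proof (atan_bound u). pose proof PI_RGT_0. lra. }
  split; [apply atan_lt_angle; auto|].
  rewrite cos_atan, sin_atan. fold q. rewrite Hrq. f_equal; unfold u; field; lra.
Qed.

Lemma not_sector_cases th (l : Defs.C) : 0 < th < PI -> ~ sector th l ->
  fst l <= 0 \/ sin th * sin th * (fst l * fst l + snd l * snd l) <= snd l * snd l.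
Proof.
  intros Hth Hn. destruct l as [x y]; simpl.
  destruct (Rle_or_lt x 0) as [H|H]; [left; auto| right].
  apply Rnot_lt_le. intros Hc. apply Hn. apply sector_of; auto.
Qed.

Lemma dist_sq_bounds s x y t : 0 < s -> s * s <= 1 -> 0 <= t ->
  (x <= 0 \/ s * s * (x * x + y * y) <= y * y) ->
  s * s * (x * x + y * y) <= (x - t) * (x - t) + y * y /\
  s * s * (t * t) <= (x - t) * (x - t) + y * y.
Proof.
  intros Hs Hs1 Ht Hc.
  pose proof (Rle_0_sqr (x - t)). pose proof (Rle_0_sqr x). pose proof (Rle_0_sqr y).
  unfold Rsqr in *. split; [destruct Hc; nra|].
  destruct Hc as [Hc|Hc]; [nra|].
  destruct (Rlt_or_le 0 (1 - s * s)) as [Hp|Hp]; 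
    [| assert (Hs2 : s * s = 1) by lra; rewrite Hs2 in *; assert (x * x <= 0) by nra; nra].
  assert (E : (1 - s * s) * ((x - t) * (x - t) + y * y - s * s * (t * t)) =
    ((1 - s * s) * t - x) * ((1 - s * s) * t - x) + ((1 - s * s) * (y * y) - s * s * (x * x)))
    by ring.
  assert (0 <= (1 - s * s) * ((x - t) * (x - t) + y * y - s * s * (t * t))).
  { rewrite E. pose proof (Rle_0_sqr ((1 - s * s) * t - x)). unfold Rsqr in *.
    apply Rplus_le_le_0_compat; nra. }
  assert (0 <= (x - t) * (x - t) + y * y - s * s * (t * t)) by (apply (Rmult_le_reg_l (1 - s * s)); lra).
  lra.
Qed.

Lemma dist_bounds th (l : Defs.C) t : 0 < th < PI -> ~ sector th l -> 0 <= t ->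
  sin th * Cmod l <= Cmod (Cminus l (RtoC t)) /\ sin th * t <= Cmod (Cminus l (RtoC t)).
Proof.
  intros Hth Hn Ht. pose proof (not_sector_cases th l Hth Hn) as Hc.
  assert (Hs : 0 < sin th) by (apply sin_gt_0; lra).
  assert (Hs1 : sin th * sin th <= 1) by (pose proof (SIN_bound th); nra).
  destruct l as [x y]; simpl in *. unfold Cmod, Cminus, RtoC; simpl.
  replace ((x - t) * ((x - t) * 1) + (y - 0) * ((y - 0) * 1)) with ((x - t) * (x - t) + y * y) by ring.
  replace (x * (x * 1) + y * (y * 1)) with (x * x + y * y) by ring.
  destruct (dist_sq_bounds (sin th) x y t Hs Hs1 Ht Hc) as [D1 D2].
  assert (Hsq : forall a b, 0 <= a -> 0 <= b -> a * a <= b * b -> a <= b) by (intros; nra).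
  pose proof (Rle_0_sqr (x - t)). pose proof (Rle_0_sqr x). pose proof (Rle_0_sqr y).
  unfold Rsqr in *.
  pose proof (sqrt_pos ((x - t) * (x - t) + y * y)).
  pose proof (sqrt_pos (x * x + y * y)).
  pose proof (sqrt_sqrt ((x - t) * (x - t) + y * y) ltac:(lra)).
  pose proof (sqrt_sqrt (x * x + y * y) ltac:(lra)).
  split; apply Hsq; auto; nra.
Qed.

Lemma not_csector th l : ~ csector th l -> ~ sector th l.
Proof.
  intros Hn Hs. apply Hn. intros eps Heps. exists l. split; auto.
  destruct l as [x y]. unfold Cmod, Cminus; simpl.
  replace ((x - x) * ((x - x) * 1) + (y - y) * ((y - y) * 1)) with 0 by ring. rewrite sqrt_0. auto.
Qed.

(** * Part (a): resolvents of sectorial multipliers *)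

(** Complex arithmetic, transferred from Coquelicot's complex numbers (the same
    pairs of reals). *)
Lemma Cmod_mul (a b : Defs.C) : Cmod (Cmul a b) = Cmod a * Cmod b.
Proof. exact (Complex.Cmod_mult a b). Qed.

Lemma Cmod_Cinv (a : Defs.C) : a <> RtoC 0 -> Cmod (Complex.Cinv a) = / Cmod a.
Proof. intros H. exact (Complex.Cmod_inv a H). Qed.

Lemma ne0_of_Cmod (a : Defs.C) : 0 < Cmod a -> a <> RtoC 0.
Proof. intros H E. rewrite E, Cmod_RtoC, Rabs_R0 in H. lra. Qed.

(** Coquelicot's [field] instance for complex numbers is only visible once its
    module is imported, which would shadow the names of [Defs]; it is imported
    in this section only. *)
Section ComplexField.
Import Complex.

Lemma Cinv_r (a : Defs.C) : a <> Defs.RtoC 0 -> Defs.Cmul a (Cinv a) = Defs.RtoC 1.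
Proof. intros H. change (Cmult a (Cinv a) = RtoC 1). field; auto. Qed.

Lemma Cinv_diff (u v : Defs.C) : u <> Defs.RtoC 0 -> v <> Defs.RtoC 0 ->
  Defs.Cminus (Cinv v) (Cinv u) = Defs.Cmul (Defs.Cminus u v) (Cinv (Defs.Cmul u v)).
Proof.
  intros Hu Hv. change (Cminus (Cinv v) (Cinv u) = Cmult (Cminus u v) (Cinv (Cmult u v))).
  field. split; auto.
Qed.

End ComplexField.

(** Symbols of [(l - A)^-1], [l (l - A)^-1] and [A (l - A)^-1] for the
    multiplier [A] with eigenvalues [a_k]. *)
Definition res_symbol (l : Defs.C) (a : nat -> R) (k : nat) : Defs.C :=
  Complex.Cinv (Cminus l (RtoC (a k))).
Definition lres_symbol (l : Defs.C) (a : nat -> R) (k : nat) : Defs.C := Cmul l (res_symbol l a k).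
Definition ares_symbol (l : Defs.C) (a : nat -> R) (k : nat) : Defs.C :=
  Cmul (RtoC (a k)) (res_symbol l a k).

Lemma variation_dominated (m : nat -> Defs.C) (h : nat -> R) N :
  (forall k, Cmod (Cminus (m (S k)) (m k)) <= h k - h (S k)) ->
  sumR (fun k => Cmod (Cminus (m (S k)) (m k))) N <= h O - h N.
Proof.
  intros H. eapply Rle_trans; [apply sumR_le, H|].
  induction N; simpl; lra.
Qed.

Section ResolventSymbols.

Variable th : R.
Variable l : Defs.C.
Variable a : nat -> R.
Hypothesis Hth : 0 < th < PI.
Hypothesis Hns : ~ sector th l.
Hypothesis Ha : forall k, 0 < a k.
Hypothesis Hm : forall k, a k <= a (S k).

Let s := sin th.
Let d k := Cmod (Cminus l (RtoC (a k))).

Let Hs : 0 < s.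
Proof. apply sin_gt_0; lra. Qed.

Let Hd_l k : s * Cmod l <= d k.
Proof. apply (dist_bounds th l (a k) Hth Hns); left; auto. Qed.

Let Hd_a k : s * a k <= d k.
Proof. apply (dist_bounds th l (a k) Hth Hns); left; auto. Qed.

Let Hd_pos k : 0 < d k.
Proof. pose proof (Hd_a k); pose proof (Ha k); pose proof Hs; nra. Qed.

Lemma res_denom_ne0 k : Cminus l (RtoC (a k)) <> RtoC 0.
Proof. apply ne0_of_Cmod, Hd_pos. Qed.

Lemma res_symbol_inv k : Cmul (res_symbol l a k) (Cminus l (RtoC (a k))) = RtoC 1.
Proof.
  rewrite <- (Cinv_r _ (res_denom_ne0 k)). unfold res_symbol.
  generalize (Complex.Cinv (Cminus l (RtoC (a k)))) as c.
  generalize (Cminus l (RtoC (a k))) as u. intros u c. cring.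
Qed.

Lemma lres_ares k : Cminus (lres_symbol l a k) (ares_symbol l a k) = RtoC 1.
Proof.
  rewrite <- (res_symbol_inv k). unfold lres_symbol, ares_symbol.
  generalize (res_symbol l a k) as c. intros c. cring.
Qed.

Let Hres_mod k : Cmod (res_symbol l a k) = / d k.
Proof. unfold res_symbol. rewrite Cmod_Cinv; auto. apply res_denom_ne0. Qed.

Let Hres_diff k :
  Cmod (Cminus (res_symbol l a (S k)) (res_symbol l a k)) = (a (S k) - a k) / (d k * d (S k)).
Proof.
  pose proof (Hd_pos k); pose proof (Hd_pos (S k)).
  unfold res_symbol. rewrite Cinv_diff by apply res_denom_ne0.
  replace (Cminus (Cminus l (RtoC (a k))) (Cminus l (RtoC (a (S k))))) with (RtoC (a (S k) - a k))
    by cring.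
  assert (Hprod : Cmul (Cminus l (RtoC (a k))) (Cminus l (RtoC (a (S k)))) <> RtoC 0).
  { apply ne0_of_Cmod. rewrite Cmod_mul. change (0 < d k * d (S k)). nra. }
  rewrite Cmod_mul, Cmod_RtoC, Cmod_Cinv by exact Hprod.
  rewrite Cmod_mul, Rabs_right by (specialize (Hm k); lra).
  change (Cmod (Cminus l (RtoC (a k)))) with (d k).
  change (Cmod (Cminus l (RtoC (a (S k))))) with (d (S k)).
  field; lra.
Qed.

Lemma res_symbol_bv : bounded_variation (res_symbol l a) (/ (s * a O)) (/ (s * s * a O)).
Proof.
  pose proof Hs. split.
  - intros k. rewrite Hres_mod. pose proof (Hd_a k); pose proof (mono_le a Hm O k ltac:(lia));
      pose proof (Ha O). apply Rinv_le_contravar; nra.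
  - intros N. eapply Rle_trans; [apply (variation_dominated _ (fun k => / (s * s * a k)))|].
    + intros k. rewrite Hres_diff. pose proof (Ha k); pose proof (Ha (S k)); pose proof (Hm k).
      pose proof (Hd_a k); pose proof (Hd_a (S k)).
      replace (/ (s * s * a k) - / (s * s * a (S k))) with
        ((a (S k) - a k) / (s * s * (a k * a (S k)))) by (field; nra).
      apply Rmult_le_compat_l; [lra|]. apply Rinv_le_contravar; [repeat apply Rmult_lt_0_compat; auto|].
      replace (s * s * (a k * a (S k))) with ((s * a k) * (s * a (S k))) by ring.
      apply Rmult_le_compat; nra.
    + pose proof (Ha N). enough (0 <= / (s * s * a N)) by lra.
      left; apply Rinv_0_lt_compat; repeat apply Rmult_lt_0_compat; auto.
Qed.

(** [|l/(l - a_k)| <= 1/s], with variation [<= 4/s^2]: the increments are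
    dominated by those of [(4/s^2) |l| / (|l| + a_k)]. *)
Lemma lres_symbol_bv : bounded_variation (lres_symbol l a) (/ s) (4 / (s * s)).
Proof.
  pose proof Hs. assert (HL : 0 <= Cmod l) by apply Cmod_nonneg. split.
  - intros k. unfold lres_symbol. rewrite Cmod_mul, Hres_mod.
    pose proof (Hd_l k); pose proof (Hd_pos k).
    replace (Cmod l * / d k) with ((s * Cmod l) / (s * d k)) by (field; lra).
    apply Rle_trans with (d k / (s * d k)); [|right; field; lra].
    apply Rmult_le_compat_r; [left; apply Rinv_0_lt_compat; nra| auto].
  - intros N. eapply Rle_trans;
      [apply (variation_dominated _ (fun k => 4 / (s * s) * (Cmod l / (Cmod l + a k))))|].
    + intros k.
      replace (Cminus (lres_symbol l a (S k)) (lres_symbol l a k))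
        with (Cmul l (Cminus (res_symbol l a (S k)) (res_symbol l a k)))
        by (unfold lres_symbol; generalize (res_symbol l a (S k)) (res_symbol l a k); intros; cring).
      rewrite Cmod_mul, Hres_diff.
      pose proof (Ha k); pose proof (Ha (S k)); pose proof (Hm k).
      pose proof (Hd_pos k); pose proof (Hd_pos (S k)).
      pose proof (Hd_l k); pose proof (Hd_l (S k)); pose proof (Hd_a k); pose proof (Hd_a (S k)).
      assert (Hdd : s * s * ((Cmod l + a k) * (Cmod l + a (S k))) <= 4 * (d k * d (S k))).
      { replace (s * s * ((Cmod l + a k) * (Cmod l + a (S k))))
          with ((s * (Cmod l + a k)) * (s * (Cmod l + a (S k)))) by ring.
        replace (4 * (d k * d (S k))) with ((2 * d k) * (2 * d (S k))) by ring.
        apply Rmult_le_compat; nra. }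
      replace (4 / (s * s) * (Cmod l / (Cmod l + a k)) - 4 / (s * s) * (Cmod l / (Cmod l + a (S k))))
        with (Cmod l * (a (S k) - a k) * / (s * s * ((Cmod l + a k) * (Cmod l + a (S k)) / 4)))
        by (field; lra).
      unfold Rdiv. rewrite <- Rmult_assoc. apply Rmult_le_compat_l; [nra|].
      apply Rinv_le_contravar; [apply Rmult_lt_0_compat; [nra| apply Rdiv_lt_0_compat; nra]| lra].
    + pose proof (Ha N); pose proof (Ha O).
      assert (0 <= Cmod l / (Cmod l + a N)) by (apply Rmult_le_pos; [lra| left; apply Rinv_0_lt_compat; lra]).
      assert (Cmod l / (Cmod l + a O) <= 1)
        by (apply Rmult_le_reg_r with (Cmod l + a O); [lra| field_simplify; lra]).
      assert (0 < 4 / (s * s)) by (apply Rdiv_lt_0_compat; nra).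
      nra.
Qed.

(** [a_k/(l - a_k) = l/(l - a_k) - 1], so it is bounded by [1/s + 1] with the
    same variation. *)
Lemma ares_symbol_bv : bounded_variation (ares_symbol l a) (/ s + 1) (4 / (s * s)).
Proof.
  assert (Hares : forall k, ares_symbol l a k = Cminus (lres_symbol l a k) (RtoC 1)).
  { intros k. rewrite <- (lres_ares k). generalize (lres_symbol l a k) (ares_symbol l a k).
    intros; cring. }
  destruct lres_symbol_bv as [Hmb HmV]. split.
  - intros k. rewrite Hares.
    eapply Rle_trans; [apply (Complex.Cmod_triangle (lres_symbol l a k) (Complex.Copp (RtoC 1)))|].
    rewrite Complex.Cmod_opp. change (Cmod (lres_symbol l a k) + Cmod (RtoC 1) <= / s + 1).
    rewrite Cmod_RtoC, Rabs_R1. specialize (Hmb k). lra.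
  - intros N. eapply Rle_trans; [| apply (HmV N)]. right. apply sumR_ext; intros k _.
    rewrite !Hares. f_equal. generalize (lres_symbol l a (S k)) (lres_symbol l a k). intros; cring.
Qed.

End ResolventSymbols.

(** R-bounded families are uniformly bounded (one-element lists). *)
Lemma R_bounded_bounded {X : CBanach} (F : (X -> X) -> Prop) : R_bounded F -> bounded_set F.
Proof.
  intros [K HK]. exists K. intros S HS x. pose proof (HK [(S, x)]) as H. simpl in H.
  rewrite !rad_single in H. apply H. intros q [<-|[]]; auto.
Qed.

Section Resolvent.

Context {X : CBanach} {Xs : nat -> X -> Prop} {p : nat -> X -> X} {K : R}.
Context {DA : X -> Prop} {A : X -> X} {a : nat -> R}.
Hypothesis Hs : Schauder Xs p.
Hypothesis HK : R_bound_by (partial_projs p) K.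
Hypothesis Ha : forall n, 0 < a n.
Hypothesis Hmono : forall n, a n <= a (S n).
Hypothesis HDA : forall x, DA x <-> exists l, conv (psum (fun n => vscal (RtoC (a n)) (p n x))) l.
Hypothesis HA : forall x, DA x -> conv (psum (fun n => vscal (RtoC (a n)) (p n x))) (A x).
Variables (th : R) (l : Defs.C).
Hypothesis Hth : 0 < th < PI.
Hypothesis Hns : ~ sector th l.

(** The candidate resolvent: the multiplier with symbol [1/(l - a_k)]. *)
Let R0 := mult_op p (res_symbol l a).

Let HR0 x : conv (mult_sum p (res_symbol l a) x) (R0 x).
Proof. apply (mult_op_conv Xs p K _ _ _ Hs HK (res_symbol_bv th l a Hth Hns Ha Hmono)). Qed.

Lemma multiplier_coord z : DA z -> forall k, p k (A z) = vscal (RtoC (a k)) (p k z).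
Proof. intros Hz k. apply (mult_sum_coord Hs (fun n => RtoC (a n)) z (A z)), HA, Hz. Qed.

Lemma res_left_inverse z : DA z -> R0 (vsub (vscal l z) (A z)) = z.
Proof.
  intros Hz. apply (conv_unique _ _ _ (HR0 _)).
  eapply conv_ext; [| apply (sch_conv Hs z)]. intros N. unfold mult_sum. apply psum_ext; intros k _.
  rewrite (p_sub Hs), (p_scal Hs), multiplier_coord by auto.
  rewrite vsub_scal_r, vscal_assoc, (res_symbol_inv th l a Hth Hns Ha), rs_1; reflexivity.
Qed.

(** [R0 x] lies in the domain, and [(l - A) R0 x = x]: coordinatewise,
    [l/(l - a_k) - a_k/(l - a_k) = 1]. *)
Lemma res_right_inverse x : DA (R0 x) /\ vsub (vscal l (R0 x)) (A (R0 x)) = x.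
Proof.
  assert (HAR : conv (mult_sum p (ares_symbol l a) x) (mult_op p (ares_symbol l a) x))
    by apply (mult_op_conv Xs p K _ _ _ Hs HK (ares_symbol_bv th l a Hth Hns Ha Hmono)).
  assert (Hpy : forall k, p k (R0 x) = vscal (res_symbol l a k) (p k x))
    by (apply (mult_sum_coord Hs), HR0).
  assert (Hc : conv (psum (fun n => vscal (RtoC (a n)) (p n (R0 x)))) (mult_op p (ares_symbol l a) x)).
  { eapply conv_ext; [| apply HAR]. intros N. unfold mult_sum. apply psum_ext; intros k _.
    rewrite Hpy, vscal_assoc; auto. }
  assert (HDy : DA (R0 x)) by (apply HDA; eauto).
  split; auto.
  rewrite (conv_unique _ _ _ (HA _ HDy) Hc).
  apply (conv_unique (fun N => vsub (vscal l (mult_sum p (res_symbol l a) x N))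
                                    (mult_sum p (ares_symbol l a) x N))).
  - apply conv_sub; [apply conv_scal, HR0| apply HAR].
  - eapply conv_ext; [| apply (sch_conv Hs x)]. intros N. unfold mult_sum.
    rewrite <- psum_scal, <- psum_sub. apply psum_ext; intros k _.
    rewrite vscal_assoc, vsub_scal_r.
    change (Cmul l (res_symbol l a k)) with (lres_symbol l a k).
    rewrite (lres_ares th l a Hth Hns Ha), rs_1; reflexivity.
Qed.

Lemma multiplier_resolvent :
  resolvent_op DA A l R0 /\ (forall R, resolvent_op DA A l R -> forall x, R x = R0 x).
Proof.
  split; [split; [|split; [apply res_right_inverse| apply res_left_inverse]]|].
  - split; [split|].
    + intros x y. apply (conv_unique _ _ _ (HR0 _)).
      eapply conv_ext; [| apply conv_add; apply HR0]. intros N. symmetry; apply (mult_sum_add Hs).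
    + intros c x. apply (conv_unique _ _ _ (HR0 _)).
      eapply conv_ext; [| apply conv_scal; apply HR0]. intros N. symmetry; apply (mult_sum_scal Hs).
    + eexists. intros x. apply (conv_le _ _ _ (HR0 x)). intros N.
      apply (mult_sum_norm p K _ _ _ HK (res_symbol_bv th l a Hth Hns Ha Hmono)).
  - intros R [_ [HR _]] x. destruct (HR x) as [HD HE].
    rewrite <- HE at 2. rewrite res_left_inverse; auto.
Qed.

Lemma scaled_resolvent_conv R : resolvent_op DA A l R ->
  forall x, conv (mult_sum p (lres_symbol l a) x) (vscal l (R x)).
Proof.
  intros HR x. rewrite (proj2 multiplier_resolvent R HR).
  eapply conv_ext; [| apply conv_scal, HR0].
  intros N. unfold mult_sum. rewrite <- psum_scal. apply psum_ext; intros k _.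
  rewrite vscal_assoc; auto.
Qed.

End Resolvent.

Lemma sectorial_multiplier_R_sectorial {X : CBanach} (Xs : nat -> X -> Prop) (p : nat -> X -> X) :
  R_Schauder Xs p ->
  forall (DA : X -> Prop) (A : X -> X),
    (exists w, 0 < w < PI /\ sectorial w DA A) -> sect_multiplier Xs p DA A -> R_sectorial_type0 DA A.
Proof.
  intros [Hs [K HK]] DA A [w [Hw [Hcdd _]]] [a [Ha [Hmono [HDA HA]]]].
  assert (Rsect : forall th, 0 < th < PI -> R_bounded (sect_res_set DA A th)).
  { intros th Hth.
    apply (multiplier_family_R_bounded p K (/ sin th) (4 / (sin th * sin th)) _ HK).
    intros S [l [R [Hnc [HR HS]]]]. exists (lres_symbol l a). split.
    - apply lres_symbol_bv; auto. apply not_csector; auto.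
    - intros x. rewrite HS. eapply scaled_resolvent_conv; eauto. apply not_csector; auto. }
  intros w' Hw'. split; [split; [exact Hcdd| split]|].
  - intros l Hl. eexists.
    apply (multiplier_resolvent Hs HK Ha Hmono HDA HA w' l Hw' (not_csector _ _ Hl)).
  - intros th Hth. apply R_bounded_bounded, Rsect. lra.
  - intros th Hth. apply Rsect. lra.
Qed.

Theorem lemma2 (X : CBanach) (Xs : nat -> X -> Prop) (p : nat -> X -> X) :
  R_Schauder Xs p ->
  (forall (DA : X -> Prop) (A : X -> X),
      (exists w, 0 < w < PI /\ sectorial w DA A) ->
      sect_multiplier Xs p DA A ->
      R_sectorial_type0 DA A) /\
  (forall T : X -> X,
      Ritt T -> Ritt_multiplier Xs p T -> R_Ritt T).
Proof.
  intros HR. split.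
  - apply sectorial_multiplier_R_sectorial; auto.
  - apply ritt_multiplier_R_Ritt; auto.
Qed.
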